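(* Let $r'(n)=e^{-n^3}$, $A'_n=\bigcup_{1\leq m\leq n,\ \gcd(m,n)=1}\left(\frac mn-r'(n),\frac mn+r'(n)\right)$ and $G=\bigcap_{k\geq1}\bigcup_{n\geq k}A'_n$. Then $G$ is a dense $G_\delta$ set contained in $\mathcal{S}$, $G$ has zero logarithmic measure, and hence $G$ is polar.
   Context: For $\alpha\in(0,1)\setminus\mathbb{Q}$ let $p_s/q_s$ be its continued fraction convergents, and $\mathcal{S}=\left\{\alpha\in(0,1)\setminus\mathbb{Q}:\ \limsup_{s\to\infty}\frac{\log q_{s+1}}{q_s^2\log q_s}=+\infty\right\}$. Logarithmic measure is the Hausdorff $h$-measure with $h(r)=1/\log(1/r)$, where $\mathcal{H}^h(E)=\lim_{\delta\to0}\inf\sum_n h(\operatorname{diam}A_n/2)$, the infimum over countable coverings of $E$ by bounded sets of diameter less than $\delta$. Polar means polar in $\mathbb{C}$ (contained in the $-\infty$ set of a subharmonic function not identically $-\infty$). *)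

From Stdlib Require Import Reals Lra Lia ZArith Arith Rtopology.
Open Scope R_scope.

Definition rprime (n : nat) : R := exp (- (INR n ^ 3)).

Definition Aprime (n : nat) (x : R) : Prop :=
  exists m : nat, (1 <= m <= n)%nat /\ Nat.gcd m n = 1%nat /\
    Rabs (x - INR m / INR n) < rprime n.

Definition Gset (x : R) : Prop :=
  forall k : nat, (1 <= k)%nat -> exists n : nat, (k <= n)%nat /\ Aprime n x.

Fixpoint gauss (x : R) (k : nat) : R :=
  match k with
  | O => x
  | S k => / gauss x k - IZR (Int_part (/ gauss x k))
  end.

(** partial quotient a_{k+1} = floor(1 / x_k) *)
Definition cf_a (x : R) (k : nat) : Z := Int_part (/ gauss x k).

(** (q_{s-1}, q_s), with q_{-1} = 0, q_0 = 1, q_{s+1} = a_{s+1} q_s + q_{s-1} *)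
Fixpoint cf_qpair (x : R) (s : nat) : R * R :=
  match s with
  | O => (0, 1)
  | S s => let (a, b) := cf_qpair x s in (b, IZR (cf_a x s) * b + a)
  end.

(** denominator q_s of the s-th convergent p_s/q_s of x = [0; a_1, a_2, ...] *)
Definition cf_q (x : R) (s : nat) : R := snd (cf_qpair x s).

Definition irrational (x : R) : Prop :=
  forall p q : Z, q <> 0%Z -> x <> IZR p / IZR q.

Definition Sset (x : R) : Prop :=
  0 < x < 1 /\ irrational x /\
  forall (M : R) (s0 : nat), exists s : nat, (s0 <= s)%nat /\
    ln (cf_q x (S s)) / (cf_q x s ^ 2 * ln (cf_q x s)) > M.

Definition dense_in_unit (E : R -> Prop) : Prop :=
  forall a b : R, 0 <= a -> a < b -> b <= 1 -> exists x, E x /\ a < x < b.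

Definition G_delta (E : R -> Prop) : Prop :=
  exists U : nat -> R -> Prop,
    (forall k, open_set (U k)) /\ (forall x, E x <-> forall k, U k x).

(** h(r) = 1 / log(1/r), with h(0) = 0 (its limit). *)
Definition hlog (r : R) : R := if Req_EM_T r 0 then 0 else / ln (/ r).

(** d is the diameter of A (diameter of the empty set taken as 0) *)
Definition is_diam (A : R -> Prop) (d : R) : Prop :=
  0 <= d /\
  (forall x y, A x -> A y -> Rabs (x - y) <= d) /\
  (forall d', 0 <= d' -> (forall x y, A x -> A y -> Rabs (x - y) <= d') -> d <= d').

Definition bounded_set (A : R -> Prop) : Prop :=
  exists B, forall x, A x -> Rabs x <= B.

(** H^h(E) = lim_{delta->0} H^h_delta(E) = 0.  Since H^h_delta(E) >= 0 is
    nonincreasing in delta, this says H^h_delta(E) = 0 for every delta > 0,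
    i.e. every delta>0 and eps>0 admit a countable cover by bounded sets of
    diameter < delta whose h(diam/2)-sum is <= eps. *)
Definition log_measure_zero (E : R -> Prop) : Prop :=
  forall delta eps : R, 0 < delta -> 0 < eps ->
    exists (A : nat -> R -> Prop) (d : nat -> R),
      (forall n, bounded_set (A n) /\ is_diam (A n) (d n) /\ d n < delta) /\
      (forall x, E x -> exists n, A n x) /\
      (forall N, sum_f_R0 (fun n => hlog (d n / 2)) N <= eps).

Definition C := (R * R)%type.

(** values in [-oo, +oo): None = -oo *)
Definition ext_lt (o : option R) (c : R) : Prop :=
  match o with None => True | Some v => v < c end.
Definition ext_le (o : option R) (c : R) : Prop :=
  match o with None => True | Some v => v <= c end.

Definition cdist (z w : C) : R :=
  sqrt ((fst z - fst w) ^ 2 + (snd z - snd w) ^ 2).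

Definition usc (u : C -> option R) : Prop :=
  forall (z : C) (c : R), ext_lt (u z) c ->
    exists eps, 0 < eps /\ forall w, cdist z w < eps -> ext_lt (u w) c.

(** local sub-mean value inequality  u(w) <= (1/2pi) int_0^{2pi} u(w + r e^{it}) dt
    for 0 <= r < rho.  The (Lebesgue) integral of the usc function t |-> u(w+re^{it})
    (bounded above on the circle) equals the infimum of the integrals of its
    continuous majorants, which is how the inequality is expressed here. *)
Definition submean (u : C -> option R) : Prop :=
  forall w : C, exists rho, 0 < rho /\
    forall r, 0 <= r < rho ->
      forall (g : R -> R) (pr : Riemann_integrable g 0 (2 * PI)),
        continuity g ->
        (forall t, 0 <= t <= 2 * PI ->
           ext_le (u (fst w + r * cos t, snd w + r * sin t)) (g t)) ->
        ext_le (u w) (RiemannInt pr / (2 * PI)).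

Definition subharmonic (u : C -> option R) : Prop := usc u /\ submean u.

Definition polar (E : R -> Prop) : Prop :=
  exists u : C -> option R,
    subharmonic u /\ (exists z, u z <> None) /\
    (forall x, E x -> u (x, 0) = None).

From Stdlib Require Import Reals Rtopology Lra Lia ZArith Psatz Classical ClassicalEpsilon.
Open Scope R_scope.

(* G is a limsup of open sets, hence a G_delta, and it is dense because inside any interval
   one can nest closed intervals lying in A'_n for larger and larger n.
   A point x of G has coprime approximations |x - m/n| < e^{-n^3} with n arbitrarily large;
   such an m/n must be a convergent p_s/q_s of x, and then q_{s+1} > e^{n^3}/(2n), so that
   log q_{s+1} / (q_s^2 log q_s) is unbounded.  Covering G by the intervals of A'_n, n >= k,
   costs at most sum_{n >= k} n / n^3 <= 2/k of h-measure.
   For polarity, put w_i = (i+1)^{-1/2}, c_i = (w_i - w_{i+1}) / (i+1) and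
     phi_N(z) = sum_{i<N} c_i sum_{j<=i} log max(|z - (j+1)/(i+1)|, e^{-N}) + w_N B(z),
   where B(z) = log max(|z - 1/2|, 1) + 1 dominates each truncated logarithm.  The phi_N
   are Lipschitz, subharmonic and decreasing in N, so u = inf_N phi_N is subharmonic (by
   Dini's theorem the infimum passes under circle means).  It is finite at 2i, while near
   m/n the n-th row gives phi_{n^3} <= 1 - c_{n-1} n^3 <= 1 - sqrt(n)/6, so u = -oo on G. *)

(** * G_delta and logarithmic measure *)

Lemma rprime_pos n : 0 < rprime n.
Proof. apply exp_pos. Qed.

Lemma Aprime_open n : open_set (Aprime n).
Proof.
  intros x [m [Hm [Hg Hx]]].
  assert (Hd : 0 < rprime n - Rabs (x - INR m / INR n)) by lra.
  exists (mkposreal _ Hd); intros y Hy; unfold disc in Hy; simpl in Hy.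
  exists m; split; [exact Hm | split; [exact Hg |]].
  replace (y - INR m / INR n) with ((y - x) + (x - INR m / INR n)) by ring.
  eapply Rle_lt_trans; [apply Rabs_triang | lra].
Qed.

Lemma Gset_G_delta : G_delta Gset.
Proof.
  exists (fun k x => exists n, (S k <= n)%nat /\ Aprime n x); split.
  - intros k x [n [Hn Hx]].
    destruct (Aprime_open n x Hx) as [d Hd].
    exists d; intros y Hy; exists n; auto.
  - intros x; split.
    + intros H k; apply H; lia.
    + intros H k Hk; destruct (H (pred k)) as [n [Hn Hx]].
      exists n; split; [lia | exact Hx].
Qed.

Lemma hlog_0 : hlog 0 = 0.
Proof. unfold hlog; destruct (Req_EM_T 0 0); [reflexivity | lra]. Qed.

Lemma hlog_rprime n : hlog (rprime n) = / INR n ^ 3.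
Proof.
  unfold hlog; destruct (Req_EM_T (rprime n) 0) as [h | _].
  - pose proof (rprime_pos n); lra.
  - unfold rprime; rewrite <- exp_Ropp, Ropp_involutive, ln_exp; reflexivity.
Qed.

Lemma rprime_le_inv n : (1 <= n)%nat -> rprime n <= / (INR n + 1).
Proof.
  intros Hn; unfold rprime; rewrite exp_Ropp.
  assert (1 <= INR n) by (apply (le_INR 1); lia).
  assert (INR n <= INR n ^ 3) by (simpl; nra).
  pose proof (exp_ineq1_le (INR n ^ 3)).
  apply Rinv_le_contravar; lra.
Qed.

Lemma is_diam_ball c r : 0 < r -> is_diam (fun x => Rabs (x - c) < r) (2 * r).
Proof.
  intros Hr; split; [lra | split].
  - intros x y Hx Hy; replace (x - y) with ((x - c) - (y - c)) by ring.
    eapply Rle_trans; [apply Rabs_triang |]; rewrite Rabs_Ropp; lra.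
  - intros d' Hd' H; destruct (Rle_or_lt (2 * r) d') as [h | h]; [exact h |].
    set (t := (r + d' / 2) / 2).
    specialize (H (c + t) (c - t)).
    replace (c + t - c) with t in H by ring; replace (c - t - c) with (- t) in H by ring.
    replace (c + t - (c - t)) with (2 * t) in H by ring.
    rewrite Rabs_Ropp, !Rabs_right in H by (unfold t; lra).
    unfold t in H; lra.
Qed.

Lemma is_diam_empty (A : R -> Prop) : (forall x, ~ A x) -> is_diam A 0.
Proof.
  intros H; split; [lra | split].
  - intros x y Hx; exfalso; exact (H x Hx).
  - intros; lra.
Qed.

Lemma is_diam_ext (A B : R -> Prop) d : (forall x, A x <-> B x) -> is_diam B d -> is_diam A d.
Proof.
  intros H [h1 [h2 h3]]; split; [exact h1 | split].
  - intros x y hx hy; apply h2; apply H; auto.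
  - intros d' hd' h; apply h3; auto; intros x y hx hy; apply h; apply H; auto.
Qed.

Lemma bounded_ball (A : R -> Prop) c r : (forall x, A x -> Rabs (x - c) < r) -> bounded_set A.
Proof.
  intros H; exists (Rabs c + r); intros x hx; specialize (H x hx).
  replace x with ((x - c) + c) by ring.
  eapply Rle_trans; [apply Rabs_triang | lra].
Qed.

(* [j = row j ^ 2 + col j] with [col j <= 2 * row j]; the indices with [col j < row j]
   enumerate the centres [(c+1)/n], [c < n], of the intervals of [A'_n]. *)
Definition row (j : nat) : nat := Nat.sqrt j.
Definition col (j : nat) : nat := j - row j * row j.

Lemma row_col_succ j :
  (row (S j) = row j /\ col (S j) = S (col j) /\ (col j < 2 * row j)%nat) \/
  (row (S j) = S (row j) /\ col (S j) = 0%nat /\ col j = (2 * row j)%nat).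
Proof.
  unfold col, row.
  pose proof (Nat.sqrt_spec j (Nat.le_0_l _)) as [h1 h2].
  pose proof (Nat.sqrt_spec (S j) (Nat.le_0_l _)) as [h3 h4].
  assert (Hle : (Nat.sqrt j <= Nat.sqrt (S j))%nat) by (apply Nat.sqrt_le_mono; lia).
  revert h1 h2 h3 h4 Hle; generalize (Nat.sqrt j) (Nat.sqrt (S j)); intros s s' h1 h2 h3 h4 Hle.
  destruct (Nat.eq_dec s s') as [<- | e]; [left; nia |].
  right; assert (s' = S s) by nia; subst s'; nia.
Qed.

Lemma row_col_pair n c : (c < n)%nat -> row (n * n + c) = n /\ col (n * n + c) = c.
Proof.
  intros H; unfold col, row.
  replace (Nat.sqrt (n * n + c)) with n by (symmetry; apply Nat.sqrt_unique; nia); lia.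
Qed.

Definition in_cover (k j : nat) : bool := (k <=? row j)%nat && (col j <? row j)%nat.

Definition cover (k j : nat) (x : R) : Prop :=
  in_cover k j = true /\ Rabs (x - INR (S (col j)) / INR (row j)) < rprime (row j).

Definition cover_diam (k j : nat) : R := if in_cover k j then 2 * rprime (row j) else 0.

Definition cover_weight (k j : nat) : R := if in_cover k j then / INR (row j) ^ 3 else 0.

Lemma hlog_cover_diam k j : hlog (cover_diam k j / 2) = cover_weight k j.
Proof.
  unfold cover_diam, cover_weight; destruct (in_cover k j).
  - replace (2 * rprime (row j) / 2) with (rprime (row j)) by field; apply hlog_rprime.
  - replace (0 / 2) with 0 by field; apply hlog_0.
Qed.

(* Bounds the weight of the covering sets of index >= j: row [n] has total weight
   [n / n^3], and [2/n - 1/n^2 >= 2/(n+1)]. *)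
Definition cover_tail (k j : nat) : R :=
  if (row j <? k)%nat then 2 / INR k
  else 2 / INR (row j) - INR (Nat.min (col j) (row j)) / INR (row j) ^ 3.

Lemma cover_tail_step k j : (1 <= k)%nat -> cover_weight k j <= cover_tail k j - cover_tail k (S j).
Proof.
  intros Hk; unfold cover_tail, cover_weight, in_cover.
  destruct (row_col_succ j) as [[e1 [e2 e3]] | [e1 [e2 e3]]]; rewrite e1, e2.
  - destruct (Nat.ltb_spec (row j) k) as [h | h].
    + replace (k <=? row j)%nat with false by (symmetry; apply Nat.leb_gt; lia); cbn [andb]; lra.
    + replace (k <=? row j)%nat with true by (symmetry; apply Nat.leb_le; lia); cbn [andb].
      assert (hn : 0 < INR (row j)) by (apply lt_0_INR; lia).
      destruct (Nat.ltb_spec (col j) (row j)).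
      * rewrite !Nat.min_l by lia; rewrite S_INR; unfold Rdiv; field_simplify; lra.
      * rewrite !Nat.min_r by lia; lra.
  - replace (col j <? row j)%nat with false by (symmetry; apply Nat.ltb_ge; lia).
    rewrite Bool.andb_false_r, Nat.min_0_l, Nat.min_r by lia.
    change (INR 0) with 0; unfold Rdiv; rewrite Rmult_0_l, Rminus_0_r.
    destruct (Nat.ltb_spec (row j) k); destruct (Nat.ltb_spec (S (row j)) k); try lia.
    + lra.
    + replace k with (S (row j)) by lia; lra.
    + assert (1 <= INR (row j)) by (apply (le_INR 1); lia).
      rewrite S_INR.
      replace (2 * / INR (row j) - INR (row j) * / INR (row j) ^ 3 - 2 * / (INR (row j) + 1))
        with ((INR (row j) - 1) / (INR (row j) ^ 2 * (INR (row j) + 1))) by (field; lra).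
      apply Rmult_le_pos; [lra |]; left; apply Rinv_0_lt_compat; nra.
Qed.

Lemma cover_tail_nonneg k j : (1 <= k)%nat -> 0 <= cover_tail k j.
Proof.
  intros Hk; unfold cover_tail; destruct (Nat.ltb_spec (row j) k).
  - assert (0 < INR k) by (apply lt_0_INR; lia).
    apply Rmult_le_pos; [lra | left; apply Rinv_0_lt_compat; lra].
  - assert (INR (Nat.min (col j) (row j)) <= INR (row j)) by (apply le_INR; lia).
    assert (1 <= INR (row j)) by (apply (le_INR 1); lia).
    replace (2 / INR (row j) - INR (Nat.min (col j) (row j)) / INR (row j) ^ 3)
      with ((2 * INR (row j) ^ 2 - INR (Nat.min (col j) (row j))) / INR (row j) ^ 3) by (field; lra).
    apply Rmult_le_pos; [nra |]; left; apply Rinv_0_lt_compat, pow_lt; lra.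
Qed.

Lemma sum_cover_weight_le k N : (1 <= k)%nat -> sum_f_R0 (cover_weight k) N <= 2 / INR k.
Proof.
  intros Hk.
  assert (H : sum_f_R0 (cover_weight k) N + cover_tail k (S N) <= cover_tail k 0).
  { induction N as [| N IH]; simpl.
    - pose proof (cover_tail_step k 0 Hk); lra.
    - pose proof (cover_tail_step k (S N) Hk); lra. }
  unfold cover_tail at 2 in H; replace (row 0) with 0%nat in H by reflexivity.
  destruct (Nat.ltb_spec 0 k); [| lia].
  pose proof (cover_tail_nonneg k (S N) Hk); lra.
Qed.

Lemma cover_bounded k j : bounded_set (cover k j).
Proof.
  apply (bounded_ball _ (INR (S (col j)) / INR (row j)) (rprime (row j))).
  intros x [_ Hx]; exact Hx.
Qed.

Lemma cover_is_diam k j : is_diam (cover k j) (cover_diam k j).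
Proof.
  unfold cover_diam; destruct (in_cover k j) eqn:E.
  - eapply is_diam_ext; [| apply is_diam_ball, rprime_pos].
    intros x; split; [intros [_ h]; exact h | intros h; split; auto].
  - apply is_diam_empty; intros x [h _]; congruence.
Qed.

Lemma cover_diam_le k j : (1 <= k)%nat -> cover_diam k j <= 2 / INR k.
Proof.
  intros Hk; unfold cover_diam, in_cover.
  assert (0 < INR k) by (apply lt_0_INR; lia).
  destruct (Nat.leb_spec k (row j)); destruct (Nat.ltb_spec (col j) (row j)); simpl;
    try (apply Rmult_le_pos; [lra | left; apply Rinv_0_lt_compat; lra]).
  pose proof (rprime_le_inv (row j) ltac:(lia)).
  assert (INR k <= INR (row j)) by (apply le_INR; lia).
  assert (/ (INR (row j) + 1) <= / INR k) by (apply Rinv_le_contravar; lra).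
  unfold Rdiv; lra.
Qed.

Lemma Gset_in_cover k x : (1 <= k)%nat -> Gset x -> exists j, cover k j x.
Proof.
  intros Hk Hx; destruct (Hx k Hk) as [n [Hn [m [Hm [_ Hxm]]]]].
  exists (n * n + pred m)%nat; unfold cover, in_cover.
  destruct (row_col_pair n (pred m) ltac:(lia)) as [-> ->].
  replace (S (pred m)) with m by lia; split; [| exact Hxm].
  apply andb_true_intro; split; [apply Nat.leb_le | apply Nat.ltb_lt]; lia.
Qed.

Lemma Gset_log_measure_zero : log_measure_zero Gset.
Proof.
  intros delta eps Hd He.
  destruct (INR_unbounded (2 / Rmin delta eps)) as [k0 Hk0].
  set (k := S k0); assert (Hk : (1 <= k)%nat) by (unfold k; lia).
  assert (Hsmall : 2 / INR k < Rmin delta eps).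
  { assert (0 < Rmin delta eps) by (apply Rmin_glb_lt; lra).
    assert (INR k0 < INR k) by (apply lt_INR; unfold k; lia).
    assert (0 < INR k) by (apply lt_0_INR; lia).
    apply (Rmult_lt_reg_r (INR k / Rmin delta eps)); [apply Rdiv_lt_0_compat; lra |].
    replace (2 / INR k * (INR k / Rmin delta eps)) with (2 / Rmin delta eps) by (field; lra).
    replace (Rmin delta eps * (INR k / Rmin delta eps)) with (INR k) by (field; lra); lra. }
  pose proof (Rmin_l delta eps); pose proof (Rmin_r delta eps).
  exists (cover k), (cover_diam k); split; [| split].
  - intros j; split; [apply cover_bounded | split; [apply cover_is_diam |]].
    pose proof (cover_diam_le k j Hk); lra.
  - intros x Hx; exact (Gset_in_cover k x Hk Hx).
  - intros N; rewrite (sum_eq _ (cover_weight k)) by (intros; apply hlog_cover_diam).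
    pose proof (sum_cover_weight_le k N Hk); lra.
Qed.

(** * Density *)

Lemma Rlt_div_r_iff a b c : 0 < c -> a < b / c <-> a * c < b.
Proof.
  intros hc; split; intros h.
  - apply (Rmult_lt_compat_r c) in h; [| exact hc].
    unfold Rdiv in h; rewrite Rmult_assoc, Rinv_l, Rmult_1_r in h by lra; exact h.
  - apply (Rmult_lt_reg_r c); [exact hc |].
    unfold Rdiv; rewrite Rmult_assoc, Rinv_l, Rmult_1_r by lra; exact h.
Qed.

Lemma Rlt_div_l_iff a b c : 0 < c -> a / c < b <-> a < b * c.
Proof.
  intros hc; split; intros h.
  - apply (Rmult_lt_compat_r c) in h; [| exact hc].
    unfold Rdiv in h; rewrite Rmult_assoc, Rinv_l, Rmult_1_r in h by lra; exact h.
  - apply (Rmult_lt_reg_r c); [exact hc |].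
    unfold Rdiv; rewrite Rmult_assoc, Rinv_l, Rmult_1_r by lra; exact h.
Qed.

Lemma divide_odd_pow2 g i j : Nat.divide g (2 * i + 1) -> Nat.divide g (2 ^ j) -> g = 1%nat.
Proof.
  intros Hodd; induction j as [| j IH]; intros Hj.
  - apply Nat.divide_1_r; exact Hj.
  - apply IH, (Nat.gauss g 2); [rewrite Nat.pow_succ_r' in Hj; exact Hj |].
    pose proof (Nat.gcd_divide_l g 2) as Hdg; pose proof (Nat.gcd_divide_r g 2) as Hd2.
    assert ((Nat.gcd g 2 <= 2)%nat) by (apply Nat.divide_pos_le; [lia | exact Hd2]).
    assert (Nat.gcd g 2 <> 0%nat) by (intros E; apply Nat.gcd_eq_0 in E; lia).
    assert (Nat.gcd g 2 <> 2%nat).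
    { intros E; rewrite E in Hdg.
      destruct (Nat.divide_trans _ _ _ Hdg Hodd) as [z hz]; lia. }
    lia.
Qed.

Lemma pow2_unbounded (x : R) : exists j : nat, x < 2 ^ j.
Proof.
  destruct (INR_unbounded x) as [n hn]; exists n.
  enough (INR n <= 2 ^ n) by lra.
  clear hn; induction n as [| n IH]; [simpl; lra |].
  rewrite S_INR; pose proof (pow_R1_Rle 2 n ltac:(lra)); simpl; lra.
Qed.

Lemma nat_floor y : 0 <= y -> exists m : nat, INR m <= y < INR m + 1.
Proof.
  intros hy; pose proof (base_Int_part y) as [h1 h2].
  assert (hz : (0 <= Int_part y)%Z).
  { assert (hlt : IZR (-1) < IZR (Int_part y)) by lra; apply lt_IZR in hlt; lia. }
  exists (Z.to_nat (Int_part y)); rewrite INR_IZR_INZ, Z2Nat.id by exact hz; lra.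
Qed.

(* Odd numerators over a large power of 2: consecutive ones are [2 / 2^j] apart. *)
Lemma coprime_fraction_between a b K : 0 <= a -> a < b -> b <= 1 ->
  exists n m, (K <= n)%nat /\ (1 <= m <= n)%nat /\ Nat.gcd m n = 1%nat /\
    a < INR m / INR n < b.
Proof.
  intros ha hab hb.
  destruct (pow2_unbounded (Rmax (INR K) (4 / (b - a)))) as [j hj].
  pose proof (Rmax_l (INR K) (4 / (b - a))); pose proof (Rmax_r (INR K) (4 / (b - a))).
  assert (hN : INR (2 ^ j) = 2 ^ j) by (rewrite pow_INR; reflexivity).
  assert (hNpos : 0 < 2 ^ j) by (apply pow_lt; lra).
  assert (hwide : 4 < (b - a) * 2 ^ j).
  { assert (h : 4 / (b - a) < 2 ^ j) by lra.
    apply (Rlt_div_l_iff 4 (2 ^ j) (b - a)) in h; lra. }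
  destruct (nat_floor (a * 2 ^ j) ltac:(nra)) as [m0 hm0].
  set (m := (2 * ((m0 + 1) / 2) + 1)%nat).
  assert (hm : INR m0 + 1 <= INR m <= INR m0 + 2).
  { rewrite <- S_INR; replace (INR m0 + 2) with (INR (m0 + 2)) by (rewrite plus_INR; reflexivity).
    pose proof (Nat.div_mod (m0 + 1) 2 ltac:(lia)); pose proof (Nat.mod_upper_bound (m0 + 1) 2 ltac:(lia)).
    split; apply le_INR; unfold m; lia. }
  assert (hlt : a < INR m / INR (2 ^ j) < b).
  { rewrite hN, !Rlt_div_r_iff, Rlt_div_l_iff by exact hNpos; lra. }
  exists (2 ^ j)%nat, m; split; [| split; [| split]].
  - apply INR_le; lra.
  - split; [unfold m; lia |].
    apply INR_le; rewrite hN; apply Rlt_le.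
    destruct hlt as [_ h]; rewrite hN in h; apply (Rlt_div_l_iff _ _ _ hNpos) in h; nra.
  - apply (divide_odd_pow2 _ ((m0 + 1) / 2) j); [apply Nat.gcd_divide_l | apply Nat.gcd_divide_r].
  - exact hlt.
Qed.

Lemma nested_intervals (a b : nat -> R) :
  (forall k, a k <= a (S k)) -> (forall k, b (S k) <= b k) -> (forall k, a k <= b k) ->
  exists x, forall k, a k <= x <= b k.
Proof.
  intros ha hb hab.
  assert (hbdec : forall j k, (j <= k)%nat -> b k <= b j).
  { induction 1 as [| k _ IH]; [lra | specialize (hb k); lra]. }
  assert (hle : forall j k, a j <= b k).
  { intros j k; destruct (Nat.le_ge_cases j k) as [h | h].
    - pose proof (tech9 a ha j k h); specialize (hab k); lra.
    - pose proof (hbdec k j h); specialize (hab j); lra. }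
  destruct (growing_cv a ha) as [x hx].
  { exists (b 0%nat); intros y [k ->]; apply hle. }
  exists x; intros k; split; [apply growing_ineq; assumption |].
  apply (@Rle_cv_lim a (fun _ => b k)); [intros; apply hle | exact hx |].
  intros e he; exists 0%nat; intros; unfold Rdist; rewrite Rminus_diag, Rabs_R0; lra.
Qed.

Definition refines (K : nat) (ab ab' : R * R) : Prop :=
  exists n, (K <= n)%nat /\ fst ab < fst ab' < snd ab' /\ snd ab' < snd ab /\
    (forall x, fst ab' <= x <= snd ab' -> Aprime n x).

Lemma refines_exists K ab : 0 <= fst ab -> fst ab < snd ab -> snd ab <= 1 ->
  exists ab', refines K ab ab'.
Proof.
  destruct ab as [a b]; simpl; intros ha hab hb.
  destruct (coprime_fraction_between a b K ha hab hb) as [n [m [hK [hm [hg hc]]]]].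
  set (c := INR m / INR n) in *.
  set (d := Rmin (Rmin (rprime n) (c - a)) (b - c) / 2).
  pose proof (rprime_pos n).
  pose proof (Rmin_l (Rmin (rprime n) (c - a)) (b - c)); pose proof (Rmin_r (Rmin (rprime n) (c - a)) (b - c)).
  pose proof (Rmin_l (rprime n) (c - a)); pose proof (Rmin_r (rprime n) (c - a)).
  assert (0 < d) by (unfold d; apply Rmult_lt_0_compat; [repeat apply Rmin_glb_lt |]; lra).
  exists (c - d, c + d), n; simpl; split; [exact hK |].
  repeat split; try (unfold d in *; lra).
  intros x hx; exists m; split; [exact hm | split; [exact hg |]].
  simpl in hx; fold c; apply Rabs_def1; unfold d in *; lra.
Qed.

Definition refine (K : nat) (ab : R * R) : R * R := epsilon (inhabits ab) (refines K ab).

Fixpoint refine_seq (ab : R * R) (k : nat) : R * R :=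
  match k with O => ab | S k => refine (S k) (refine_seq ab k) end.

Lemma refine_seq_spec ab k : 0 <= fst ab -> fst ab < snd ab -> snd ab <= 1 ->
  0 <= fst (refine_seq ab k) /\ fst (refine_seq ab k) < snd (refine_seq ab k) /\
  snd (refine_seq ab k) <= 1 /\ refines (S k) (refine_seq ab k) (refine_seq ab (S k)).
Proof.
  intros ha hab hb.
  assert (hstep : forall j, 0 <= fst (refine_seq ab j) -> fst (refine_seq ab j) < snd (refine_seq ab j) ->
                   snd (refine_seq ab j) <= 1 -> refines (S j) (refine_seq ab j) (refine_seq ab (S j))).
  { intros j h1 h2 h3; cbn [refine_seq]; unfold refine; apply epsilon_spec, refines_exists; assumption. }
  induction k as [| k [h1 [h2 [h3 [n [_ [[q1 q2] [q3 _]]]]]]]].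
  - repeat split; try assumption; apply hstep; assumption.
  - repeat split; try lra; apply hstep; lra.
Qed.

Lemma Gset_dense : dense_in_unit Gset.
Proof.
  intros a b ha hab hb.
  pose proof (fun k => refine_seq_spec (a, b) k ha hab hb) as spec.
  set (I := refine_seq (a, b)) in spec.
  destruct (nested_intervals (fun k => fst (I k)) (fun k => snd (I k))) as [x hx].
  - intros k; destruct (spec k) as [_ [_ [_ [n [_ [[h _] _]]]]]]; lra.
  - intros k; destruct (spec k) as [_ [_ [_ [n [_ [_ [h _]]]]]]]; lra.
  - intros k; destruct (spec k) as [_ [h _]]; lra.
  - exists x; split.
    + intros k hk; destruct (spec (pred k)) as [_ [_ [_ [n [hn [_ [_ h]]]]]]].
      exists n; split; [lia |]; apply h.
      replace (S (pred k)) with k by lia; apply hx.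
    + destruct (spec 0%nat) as [_ [_ [_ [n [_ [[q1 _] [q3 _]]]]]]].
      pose proof (hx 1%nat); simpl in q1, q3; lra.
Qed.

(** * Fast rational approximation and continued fractions *)

Lemma ln_le_ln x y : 0 < x -> x <= y -> ln x <= ln y.
Proof. intros hx [h | ->]; [left; apply ln_increasing; lra | lra]. Qed.

Lemma ln_le_sub_1 z : 0 < z -> ln z <= z - 1.
Proof. intros hz; pose proof (exp_ineq1_le (ln z)) as h; rewrite exp_ln in h by lra; lra. Qed.

Lemma ln_le_2sqrt y : 1 <= y -> ln y <= 2 * sqrt y.
Proof.
  intros hy; assert (hs : 0 < sqrt y) by (apply sqrt_lt_R0; lra).
  replace y with (sqrt y * sqrt y) at 1 by (apply sqrt_sqrt; lra).
  rewrite ln_mult by lra; pose proof (ln_le_sub_1 _ hs); lra.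
Qed.

(* [exp t >= (1 + t/2)^2] at [t = y^3]. *)
Lemma exp_cube_gt y : 1 <= y -> y ^ 2 * (y + 1) < exp (y ^ 3).
Proof.
  intros hy.
  assert (e : exp (y ^ 3) = exp (y ^ 3 / 2) * exp (y ^ 3 / 2)) by (rewrite <- exp_plus; f_equal; field).
  pose proof (exp_ineq1_le (y ^ 3 / 2)).
  assert (1 <= y ^ 3) by (simpl; nra).
  assert ((1 + y ^ 3 / 2) * (1 + y ^ 3 / 2) <= exp (y ^ 3)) by (rewrite e; apply Rmult_le_compat; lra).
  assert (y * y < 1 + (y * y) * (y * y) * (y * y) / 4) by (pose proof (pow2_ge_0 (y * y - 6 / 5)); nra).
  assert (1 <= y * y) by nra.
  simpl in *; nra.
Qed.

Lemma rprime_small n : (1 <= n)%nat -> INR n ^ 2 * (INR n + 1) * rprime n < 1.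
Proof.
  intros hn; assert (h1 : 1 <= INR n) by (apply (le_INR 1); lia).
  pose proof (exp_cube_gt (INR n) h1); unfold rprime; rewrite exp_Ropp.
  pose proof (exp_pos (INR n ^ 3)).
  apply (Rmult_lt_reg_r (exp (INR n ^ 3))); [lra |].
  rewrite Rmult_assoc, Rinv_l by lra; lra.
Qed.

Lemma IZR_abs_lt_1 z : Rabs (IZR z) < 1 -> z = 0%Z.
Proof. rewrite <- abs_IZR; intros h; apply lt_IZR in h; lia. Qed.

Lemma INR_dist_lt_1 a b : Rabs (INR a - INR b) < 1 -> a = b.
Proof.
  intros h; destruct (lt_eq_lt_dec a b) as [[hab | ->] | hab]; [| reflexivity |];
    apply le_INR in hab; rewrite S_INR in hab; apply Rabs_def2 in h; lra.
Qed.

Lemma coprime_cross_le n m a b : Nat.gcd m n = 1%nat -> (m * a = b * n)%nat -> (0 < a)%nat -> (n <= a)%nat.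
Proof.
  intros hg e ha; apply Nat.divide_pos_le; [exact ha |].
  apply (Nat.gauss n m a); [exists b; lia | rewrite Nat.gcd_comm; exact hg].
Qed.

Lemma Gset_unit_interval x : Gset x -> 0 < x < 1.
Proof.
  intros hG; destruct (hG 2%nat ltac:(lia)) as [n [hn [m [hm [hg hx]]]]].
  assert (hmn : (m < n)%nat).
  { destruct (Nat.eq_dec m n) as [-> | e]; [rewrite Nat.gcd_diag in hg; lia | lia]. }
  assert (hN : 2 <= INR n) by (apply (le_INR 2); lia).
  assert (1 <= INR m) by (apply (le_INR 1); lia).
  assert (INR m + 1 <= INR n) by (rewrite <- S_INR; apply le_INR; lia).
  pose proof (rprime_le_inv n ltac:(lia)).
  assert (/ (INR n + 1) < / INR n) by (apply Rinv_lt_contravar; nra).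
  assert (/ INR n <= INR m / INR n) by (unfold Rdiv; rewrite <- (Rmult_1_l (/ INR n)) at 1;
    apply Rmult_le_compat_r; [left; apply Rinv_0_lt_compat |]; lra).
  assert (INR m / INR n <= 1 - / INR n) by (apply (Rmult_le_reg_r (INR n)); [lra |]; field_simplify; lra).
  apply Rabs_def2 in hx; lra.
Qed.

(* A rational [p/q] is at distance [>= 1/(|q| n)] from every [m/n] it differs from,
   while [|x - m/n| < e^{-n^3}] for arbitrarily large [n]. *)
Lemma Gset_irrational x : Gset x -> irrational x.
Proof.
  intros hG p q hq ->.
  destruct (hG (S (Z.abs_nat q) + 1)%nat ltac:(lia)) as [n [hn [m [_ [hg hx]]]]].
  assert (hN : 1 <= INR n) by (apply (le_INR 1); lia).
  assert (hqn : Rabs (IZR q) + 1 <= INR n).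
  { rewrite <- abs_IZR, <- Zabs2Nat.id_abs, <- INR_IZR_INZ, <- S_INR; apply le_INR; lia. }
  assert (hq0 : IZR q <> 0) by (apply not_0_IZR; exact hq).
  assert (hmq : (Z.of_nat m * q = p * Z.of_nat n)%Z).
  { enough (Z.of_nat m * q - p * Z.of_nat n = 0)%Z by lia.
    apply IZR_abs_lt_1.
    replace (IZR (Z.of_nat m * q - p * Z.of_nat n))
      with (IZR q * INR n * (INR m / INR n - IZR p / IZR q))
      by (rewrite minus_IZR, !mult_IZR, <- !INR_IZR_INZ; field; lra).
    rewrite !Rabs_mult, (Rabs_right (INR n)), Rabs_minus_sym by lra.
    pose proof (Rabs_pos (IZR q)); pose proof (Rabs_pos (IZR p / IZR q - INR m / INR n)).
    pose proof (rprime_small n ltac:(lia)).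
    apply Rle_lt_trans with (INR n * INR n * rprime n); [| simpl in *; nra].
    apply Rmult_le_compat; try nra. }
  assert (hnat : (m * Z.abs_nat q = Z.abs_nat p * n)%nat) by (apply Nat2Z.inj; rewrite !Nat2Z.inj_mul, !Nat2Z.inj_abs_nat; nia).
  pose proof (coprime_cross_le n m (Z.abs_nat q) (Z.abs_nat p) hg hnat ltac:(lia)); lia.
Qed.

Fixpoint cf_ppair (x : R) (s : nat) : R * R :=
  match s with
  | O => (1, 0)
  | S s => let (a, b) := cf_ppair x s in (b, IZR (cf_a x s) * b + a)
  end.

Definition cf_p (x : R) (s : nat) : R := snd (cf_ppair x s).
Definition cf_p_prev (x : R) (s : nat) : R := fst (cf_ppair x s).
Definition cf_q_prev (x : R) (s : nat) : R := fst (cf_qpair x s).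

Lemma cf_q_S x s :
  cf_q_prev x (S s) = cf_q x s /\ cf_q x (S s) = IZR (cf_a x s) * cf_q x s + cf_q_prev x s.
Proof. unfold cf_q_prev, cf_q; simpl; destruct (cf_qpair x s); auto. Qed.

Lemma cf_p_S x s :
  cf_p_prev x (S s) = cf_p x s /\ cf_p x (S s) = IZR (cf_a x s) * cf_p x s + cf_p_prev x s.
Proof. unfold cf_p_prev, cf_p; simpl; destruct (cf_ppair x s); auto. Qed.

Lemma cf_a_bounds x k : IZR (cf_a x k) <= / gauss x k < IZR (cf_a x k) + 1.
Proof. unfold cf_a; pose proof (base_Int_part (/ gauss x k)); lra. Qed.

Lemma inv_frac_spec y : 0 < y < 1 -> irrational y ->
  0 < / y - IZR (Int_part (/ y)) < 1 /\ irrational (/ y - IZR (Int_part (/ y))) /\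
  (1 <= Int_part (/ y))%Z.
Proof.
  intros hy hirr.
  pose proof (base_Int_part (/ y)) as [b1 b2]; set (z := Int_part (/ y)) in *.
  assert (hinv : 1 < / y) by (rewrite <- Rinv_1; apply Rinv_lt_contravar; lra).
  assert (hneq : / y <> IZR z).
  { intros e; apply (hirr 1%Z z).
    - intros ->; simpl in e; lra.
    - rewrite <- e; simpl; field; lra. }
  split; [lra | split].
  - intros p q hq e.
    assert (hq0 : IZR q <> 0) by (apply not_0_IZR; exact hq).
    assert (hy' : / y = (IZR z * IZR q + IZR p) / IZR q) by (replace (/ y) with (IZR z + IZR p / IZR q) by lra; field; exact hq0).
    assert (hden : IZR z * IZR q + IZR p <> 0).
    { intros h0; rewrite h0 in hy'; unfold Rdiv in hy'; rewrite Rmult_0_l in hy'; lra. }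
    apply (hirr q (z * q + p)%Z).
    + intros e2; apply hden; rewrite <- mult_IZR, <- plus_IZR, e2; reflexivity.
    + rewrite plus_IZR, mult_IZR; replace y with (/ / y) by (field; lra); rewrite hy'; field; auto.
  - assert (hz : IZR 0 < IZR z) by (simpl; lra); apply lt_IZR in hz; lia.
Qed.

Section ContinuedFraction.

Variable x : R.
Hypothesis hx : 0 < x < 1.
Hypothesis hirr : irrational x.

Lemma gauss_spec k : 0 < gauss x k < 1 /\ irrational (gauss x k).
Proof.
  induction k as [| k [h1 h2]]; [simpl; auto |].
  destruct (inv_frac_spec _ h1 h2) as [g1 [g2 _]]; simpl; auto.
Qed.

Lemma cf_a_ge_1 k : 1 <= IZR (cf_a x k).
Proof.
  destruct (gauss_spec k) as [h1 h2]; destruct (inv_frac_spec _ h1 h2) as [_ [_ g]].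
  apply IZR_le in g; exact g.
Qed.

Lemma cf_q_bounds s : 0 <= cf_q_prev x s <= cf_q x s /\ 1 <= cf_q x s.
Proof.
  induction s as [| s IH]; [unfold cf_q_prev, cf_q; simpl; lra |].
  destruct (cf_q_S x s) as [-> ->]; pose proof (cf_a_ge_1 s); nra.
Qed.

Lemma cf_q_le s t : (s <= t)%nat -> cf_q x s <= cf_q x t.
Proof.
  induction 1 as [| t _ IH]; [lra |].
  destruct (cf_q_S x t) as [_ ->]; pose proof (cf_a_ge_1 t); pose proof (cf_q_bounds t); nra.
Qed.

Lemma cf_q_ge_index s : INR s <= cf_q x s.
Proof.
  enough (Hs : INR s <= cf_q x s /\ INR (S s) <= cf_q x (S s)) by apply Hs.
  induction s as [| s [h1 h2]].
  - pose proof (cf_q_bounds 0); pose proof (cf_q_bounds 1); simpl; lra.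
  - split; [exact h2 |].
    destruct (cf_q_S x (S s)) as [_ ->]; destruct (cf_q_S x s) as [hprev _].
    pose proof (cf_a_ge_1 (S s)); pose proof (cf_q_bounds s); pose proof (cf_q_bounds (S s)).
    rewrite S_INR; nra.
Qed.

Lemma cf_q_bracket y : 1 <= y -> exists s, cf_q x s <= y < cf_q x (S s).
Proof.
  intros hy; destruct (INR_unbounded y) as [N hN]; pose proof (cf_q_ge_index N).
  assert (Hb : forall N, y < cf_q x N -> exists s, cf_q x s <= y < cf_q x (S s)).
  { induction N0 as [| N0 IH]; intros h; [unfold cf_q in h; simpl in h; lra |].
    destruct (Rlt_or_le y (cf_q x N0)) as [h' | h']; [exact (IH h') | exists N0; lra]. }
  apply (Hb N); lra.
Qed.

Lemma cf_det s : cf_p_prev x s * cf_q x s - cf_p x s * cf_q_prev x s = (-1) ^ s.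
Proof.
  induction s as [| s IH]; [unfold cf_p_prev, cf_q, cf_p, cf_q_prev; simpl; ring |].
  destruct (cf_q_S x s) as [-> ->]; destruct (cf_p_S x s) as [-> ->]; simpl; rewrite <- IH; ring.
Qed.

Lemma cf_x_eq s :
  x = (cf_p x s + cf_p_prev x s * gauss x s) / (cf_q x s + cf_q_prev x s * gauss x s).
Proof.
  induction s as [| s IH]; [unfold cf_p, cf_p_prev, cf_q, cf_q_prev; simpl; field |].
  destruct (cf_q_S x s) as [-> ->]; destruct (cf_p_S x s) as [-> ->].
  destruct (gauss_spec s) as [[t1 t2] _]; destruct (gauss_spec (S s)) as [[u1 _] _].
  pose proof (cf_q_bounds s); pose proof (cf_a_ge_1 s).
  simpl in u1 |- *; fold (cf_a x s) in u1 |- *.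
  rewrite IH at 1; set (t := gauss x s) in *.
  assert (0 < cf_q x s + cf_q_prev x s * t) by nra.
  assert (0 < IZR (cf_a x s) * cf_q x s + cf_q_prev x s + cf_q x s * (/ t - IZR (cf_a x s))) by nra.
  field; repeat split; lra.
Qed.

Lemma cf_nat s :
  (exists k, cf_q x s = INR k) /\ (exists k, cf_q_prev x s = INR k) /\
  (exists k, cf_p x s = INR k) /\ (exists k, cf_p_prev x s = INR k).
Proof.
  induction s as [| s [[a ha] [[b hb] [[c hc] [d hd]]]]].
  - repeat split; [exists 1%nat | exists 0%nat | exists 0%nat | exists 1%nat]; reflexivity.
  - destruct (cf_q_S x s) as [-> ->]; destruct (cf_p_S x s) as [-> ->].
    assert (ha1 : IZR (cf_a x s) = INR (Z.to_nat (cf_a x s))).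
    { rewrite INR_IZR_INZ, Z2Nat.id; [reflexivity |]; apply le_IZR; pose proof (cf_a_ge_1 s); lra. }
    rewrite ha1; repeat split;
      [exists (Z.to_nat (cf_a x s) * a + b)%nat | exists a | exists (Z.to_nat (cf_a x s) * c + d)%nat | exists c];
      rewrite ?plus_INR, ?mult_INR; congruence.
Qed.

Lemma cf_err_eq s :
  Rabs (cf_q x s * x - cf_p x s) = gauss x s / (cf_q x s + cf_q_prev x s * gauss x s).
Proof.
  destruct (gauss_spec s) as [[t1 t2] _]; pose proof (cf_q_bounds s).
  assert (hd : 0 < cf_q x s + cf_q_prev x s * gauss x s) by nra.
  assert (E : cf_q x s * ((cf_p x s + cf_p_prev x s * gauss x s) / (cf_q x s + cf_q_prev x s * gauss x s)) - cf_p x s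
             = gauss x s * (cf_p_prev x s * cf_q x s - cf_p x s * cf_q_prev x s) / (cf_q x s + cf_q_prev x s * gauss x s))
    by (field; lra).
  rewrite <- cf_x_eq, cf_det in E; rewrite E; unfold Rdiv; rewrite !Rabs_mult, <- RPow_abs, (Rabs_left (-1)) by lra.
  replace (- -1) with 1 by ring; rewrite pow1.
  rewrite Rabs_right, Rabs_right by (try apply Rle_ge, Rlt_le, Rinv_0_lt_compat; lra); ring.
Qed.

Lemma cf_err_bounds s :
  / (cf_q x (S s) + cf_q x s) < Rabs (cf_q x s * x - cf_p x s) <= / cf_q x (S s).
Proof.
  rewrite cf_err_eq.
  destruct (gauss_spec s) as [[t1 t2] _]; pose proof (cf_q_bounds s); pose proof (cf_a_bounds x s).
  pose proof (cf_a_ge_1 s).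
  destruct (cf_q_S x s) as [_ ->]; set (t := gauss x s) in *.
  replace (t / (cf_q x s + cf_q_prev x s * t)) with (/ (cf_q x s * / t + cf_q_prev x s)) by (field; nra).
  assert (IZR (cf_a x s) * cf_q x s <= cf_q x s * / t) by nra.
  assert (cf_q x s * / t < (IZR (cf_a x s) + 1) * cf_q x s) by nra.
  assert (0 < IZR (cf_a x s) * cf_q x s + cf_q_prev x s) by nra.
  split; [apply Rinv_lt_contravar; [apply Rmult_lt_0_compat |] | apply Rinv_le_contravar]; lra.
Qed.

(* The integer [m q_s - p_s n] is [n (q_s x - p_s) - q_s (n x - m)], of modulus [< n/(n+1) + n^2 e^{-n^3} < 1]. *)
Lemma close_fraction_is_convergent n m :
  (1 <= n)%nat -> Nat.gcd m n = 1%nat -> Rabs (x - INR m / INR n) < rprime n ->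
  exists s, cf_q x s = INR n /\ cf_p x s = INR m.
Proof.
  intros hn hg hxm.
  assert (hN : 1 <= INR n) by (apply (le_INR 1); lia).
  destruct (cf_q_bracket (INR n) hN) as [s [hs1 hs2]].
  destruct (cf_nat s) as [[q hq] [_ [[p hp] _]]]; destruct (cf_nat (S s)) as [[q' hq'] _].
  pose proof (cf_q_bounds s) as [_ hq1]; pose proof (cf_err_bounds s) as [_ herr].
  assert (hq'n : INR n + 1 <= cf_q x (S s)).
  { rewrite hq' in *; rewrite <- S_INR; apply le_INR, INR_lt; exact hs2. }
  assert (hcross : (m * q = p * n)%nat).
  { apply INR_dist_lt_1; rewrite !mult_INR, <- hq, <- hp.
    replace (INR m * cf_q x s - cf_p x s * INR n)
      with (INR n * (cf_q x s * x - cf_p x s) - cf_q x s * INR n * (x - INR m / INR n)) by (field; lra).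
    pose proof (Rabs_pos (cf_q x s * x - cf_p x s)); pose proof (Rabs_pos (x - INR m / INR n)).
    assert (INR n * Rabs (cf_q x s * x - cf_p x s) <= INR n / (INR n + 1)).
    { unfold Rdiv; apply Rmult_le_compat_l; [lra |].
      eapply Rle_trans; [exact herr | apply Rinv_le_contravar; lra]. }
    assert (cf_q x s * INR n * Rabs (x - INR m / INR n) <= INR n * INR n * rprime n)
      by (apply Rmult_le_compat; nra).
    assert (INR n / (INR n + 1) + INR n * INR n * rprime n < 1).
    { pose proof (rprime_small n hn); apply (Rmult_lt_reg_r (INR n + 1)); [lra |].
      field_simplify; [simpl in *; nra | lra]. }
    eapply Rle_lt_trans; [apply Rabs_triang |].
    rewrite Rabs_Ropp, !Rabs_mult, (Rabs_right (INR n)), (Rabs_right (cf_q x s)) by lra; lra. }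
  assert (q = n).
  { pose proof (coprime_cross_le n m q p hg hcross ltac:(apply INR_lt; simpl; lra)).
    rewrite hq in hs1; apply INR_le in hs1; lia. }
  subst q; exists s; split; [exact hq |].
  rewrite hp; f_equal; nia.
Qed.

(* [1/(q_{s+1} + n) < |n x - m| < n e^{-n^3}] forces [q_{s+1} > e^{n^3} / (2n)]. *)
Lemma convergent_next_ln_gt s n m :
  (1 <= n)%nat -> cf_q x s = INR n -> cf_p x s = INR m -> Rabs (x - INR m / INR n) < rprime n ->
  INR n ^ 3 - 2 * INR n < ln (cf_q x (S s)).
Proof.
  intros hn hq hp hxm.
  set (y := INR n) in *; assert (hy : 1 <= y) by (apply (le_INR 1); lia).
  pose proof (cf_err_bounds s) as [herr _]; pose proof (cf_q_bounds (S s)) as [_ hQ].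
  rewrite hq, hp in herr; set (Q := cf_q x (S s)) in *.
  replace (y * x - INR m) with (y * (x - INR m / y)) in herr by (field; lra).
  rewrite Rabs_mult, Rabs_right in herr by lra.
  assert (hexp : exp (y ^ 3) < y * (Q + y)).
  { assert (h : / (Q + y) < y * rprime n) by (eapply Rlt_le_trans; [exact herr | apply Rmult_le_compat_l; lra]).
    unfold rprime in h; rewrite exp_Ropp in h; fold y in h.
    pose proof (exp_pos (y ^ 3)).
    apply (Rmult_lt_compat_r (exp (y ^ 3) * (Q + y))) in h; [| nra].
    field_simplify in h; lra. }
  pose proof (exp_cube_gt y hy).
  assert (hQbig : exp (y ^ 3) / (2 * y) < Q).
  { apply Rlt_div_l_iff; [lra |]; simpl in *; nra. }
  pose proof (exp_pos (y ^ 3)).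
  apply ln_increasing in hQbig; [| apply Rdiv_lt_0_compat; lra].
  unfold Rdiv in hQbig; rewrite ln_mult, ln_exp, ln_Rinv in hQbig by (try apply Rinv_0_lt_compat; lra).
  pose proof (ln_le_sub_1 (2 * y) ltac:(lra)); lra.
Qed.

End ContinuedFraction.

(* [y^2 ln y <= 2 y^2 sqrt y] and [2 M <= sqrt y - 2]. *)
Lemma ratio_gt M y L : 0 <= M -> (2 * M + 2) ^ 2 <= y -> y ^ 3 - 2 * y < L ->
  M < L / (y ^ 2 * ln y).
Proof.
  intros hM hy hL.
  assert (hsq : 2 * M + 2 <= sqrt y) by (rewrite <- (sqrt_pow2 (2 * M + 2)) by lra; apply sqrt_le_1_alt; exact hy).
  assert (hy1 : 1 < y) by nra.
  assert (hsy : sqrt y * sqrt y = y) by (apply sqrt_sqrt; lra).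
  assert (hlny : 0 < ln y) by (rewrite <- ln_1; apply ln_increasing; lra).
  pose proof (ln_le_2sqrt y ltac:(lra)).
  assert (M * (y ^ 2 * ln y) <= M * (y ^ 2 * (2 * sqrt y))).
  { apply Rmult_le_compat_l; [lra |]; apply Rmult_le_compat_l; [simpl; nra | lra]. }
  assert (M * (y ^ 2 * (2 * sqrt y)) <= y ^ 3 - 2 * y).
  { apply Rle_trans with ((sqrt y - 2) * (y ^ 2 * sqrt y)).
    - replace (M * (y ^ 2 * (2 * sqrt y))) with ((2 * M) * (y ^ 2 * sqrt y)) by ring.
      apply Rmult_le_compat_r; [simpl; nra | lra].
    - replace ((sqrt y - 2) * (y ^ 2 * sqrt y)) with (y ^ 2 * (sqrt y * sqrt y) - 2 * y ^ 2 * sqrt y) by ring.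
      rewrite hsy; simpl; nra. }
  apply Rlt_div_r_iff; [apply Rmult_lt_0_compat; [apply pow_lt |]; lra | lra].
Qed.

Lemma Gset_in_S x : Gset x -> Sset x.
Proof.
  intros hG; pose proof (Gset_unit_interval x hG) as hx; pose proof (Gset_irrational x hG) as hirr.
  split; [exact hx | split; [exact hirr |]]; intros M s0.
  set (M' := Rabs M); assert (0 <= M') by apply Rabs_pos; assert (M <= M') by apply RRle_abs.
  destruct (INR_unbounded (cf_q x s0 + (2 * M' + 2) ^ 2)) as [N0 hN0].
  destruct (hG (S N0) ltac:(lia)) as [n [hn [m [_ [hg hxm]]]]].
  assert (hyB : cf_q x s0 + (2 * M' + 2) ^ 2 < INR n) by (eapply Rlt_le_trans; [exact hN0 | apply le_INR; lia]).
  pose proof (cf_q_bounds x hx hirr s0); pose proof (pow2_ge_0 (2 * M' + 2)).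
  destruct (close_fraction_is_convergent x hx hirr n m ltac:(lia) hg hxm) as [s [hq hp]].
  pose proof (convergent_next_ln_gt x hx hirr s n m ltac:(lia) hq hp hxm).
  exists s; split.
  - destruct (Nat.le_gt_cases s0 s) as [h | h]; [exact h |].
    pose proof (cf_q_le x hx hirr s s0 ltac:(lia)); lra.
  - unfold Rgt; rewrite hq; apply Rle_lt_trans with M'; [lra |].
    apply ratio_gt; lra.
Qed.

(** * Integrals over circles *)

Definition is_integral (f : R -> R) (a b v : R) : Prop :=
  exists pr : Riemann_integrable f a b, RiemannInt pr = v.

Lemma is_integral_unique f a b v w : is_integral f a b v -> is_integral f a b w -> v = w.
Proof. intros [p1 <-] [p2 <-]; apply RiemannInt_P5. Qed.

Lemma is_integral_continuous f a b : a <= b -> (forall x, a <= x <= b -> continuity_pt f x) ->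
  exists v, is_integral f a b v.
Proof. intros h c; eexists; exists (continuity_implies_RiemannInt h c); reflexivity. Qed.

Lemma is_integral_plus_scal f g a b l v w : is_integral f a b v -> is_integral g a b w ->
  is_integral (fun x => f x + l * g x) a b (v + l * w).
Proof.
  intros [p1 <-] [p2 <-]; exists (RiemannInt_P10 l p1 p2); apply RiemannInt_P13.
Qed.

Lemma is_integral_le f g a b v w : a <= b -> is_integral f a b v -> is_integral g a b w ->
  (forall x, a < x < b -> f x <= g x) -> v <= w.
Proof. intros h [p1 <-] [p2 <-] H; apply RiemannInt_P19; auto. Qed.

Lemma is_integral_const c a b : is_integral (fun _ => c) a b (c * (b - a)).
Proof. exists (RiemannInt_P14 a b c); apply RiemannInt_P15. Qed.

Lemma is_integral_chasles f a b c v w : is_integral f a b v -> is_integral f b c w ->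
  is_integral f a c (v + w).
Proof. intros [p1 <-] [p2 <-]; exists (RiemannInt_P24 p1 p2); symmetry; apply RiemannInt_P26. Qed.

Lemma is_integral_ext f g a b v : a <= b -> (forall x, a <= x <= b -> f x = g x) ->
  is_integral f a b v -> is_integral g a b v.
Proof.
  intros h H [p <-].
  assert (HH : forall x, Rmin a b <= x <= Rmax a b -> f x = g x)
    by (rewrite Rmin_left, Rmax_right by lra; exact H).
  exists (@Riemann_integrable_ext f g a b HH p); symmetry; apply RiemannInt_P18; [exact h |].
  intros; apply H; lra.
Qed.

Lemma is_integral_FTC f F a b : a <= b -> (forall x, a <= x <= b -> continuity_pt f x) ->
  (forall x, a <= x <= b -> derivable_pt_lim F x (f x)) -> is_integral f a b (F b - F a).
Proof.
  intros h C D; exists (continuity_implies_RiemannInt h C).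
  rewrite (RiemannInt_P20 h (FTC_P1 h C)).
  assert (A : antiderivative f F a b).
  { split; [| exact h]; intros x hx; exists (exist _ (f x) (D x hx)); reflexivity. }
  destruct (antiderivative_Ucte f _ _ a b (RiemannInt_P29 h C) A) as [c hc].
  rewrite (hc b), (hc a) by lra; ring.
Qed.

Lemma continuity_pt_ln x : 0 < x -> continuity_pt ln x.
Proof. intros h; exact (derivable_continuous_pt _ _ (exist _ (/ x) (derivable_pt_lim_ln x h))). Qed.

Lemma derivable_pt_lim_affine al be x : derivable_pt_lim (fun t => al * t + be) x al.
Proof.
  intros eps he; exists (mkposreal 1 Rlt_0_1); intros h hh _.
  replace ((al * (x + h) + be - (al * x + be)) / h - al) with 0 by (field; exact hh).
  rewrite Rabs_R0; exact he.
Qed.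

Lemma is_integral_affine f a b al be v : a <= b -> 0 < al -> (forall x, continuity_pt f x) ->
  is_integral f (al * a + be) (al * b + be) v -> is_integral (fun t => f (al * t + be)) a b (v / al).
Proof.
  intros h hal C hv.
  assert (h' : al * a + be <= al * b + be) by nra.
  destruct (RiemannInt_P30 h' (fun x _ => C x)) as [g [hg _]].
  assert (Dg : forall x, al * a + be <= x <= al * b + be -> derivable_pt_lim g x (f x)).
  { intros x hx; destruct (hg x hx) as [[l hl] ->]; exact hl. }
  rewrite (is_integral_unique _ _ _ _ _ hv (is_integral_FTC f g _ _ h' (fun x _ => C x) Dg)).
  replace ((g (al * b + be) - g (al * a + be)) / al)
    with (g (al * b + be) / al - g (al * a + be) / al) by (field; lra).
  apply (is_integral_FTC _ (fun t => g (al * t + be) / al)); [exact h | intros; reg; apply C |].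
  intros x hx.
  pose proof (derivable_pt_lim_comp _ g x al _ (derivable_pt_lim_affine al be x)
                (Dg (al * x + be) ltac:(split; nra))) as hc.
  apply (derivable_pt_lim_scal _ (/ al)) in hc; unfold mult_real_fct, comp in hc.
  replace (f (al * x + be)) with (/ al * (f (al * x + be) * al)) by (field; lra).
  intros eps he; destruct (hc eps he) as [d hd]; exists d; intros hh hh0 hhd.
  replace ((g (al * (x + hh) + be) / al - g (al * x + be) / al) / hh)
    with ((/ al * g (al * (x + hh) + be) - / al * g (al * x + be)) / hh) by (field; lra).
  exact (hd hh hh0 hhd).
Qed.

Definition periodic (f : R -> R) : Prop := forall t, f (t + 2 * PI) = f t.

Lemma is_integral_shift f a b c v : a <= b -> (forall x, continuity_pt f x) ->
  is_integral f (a + c) (b + c) v -> is_integral (fun t => f (t + c)) a b v.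
Proof.
  intros h C hv.
  rewrite <- (Rmult_1_l a), <- (Rmult_1_l b) in hv.
  pose proof (is_integral_affine f a b 1 c v h Rlt_0_1 C hv) as H.
  replace (v / 1) with v in H by field.
  apply (is_integral_ext (fun t => f (1 * t + c))); auto; intros; rewrite Rmult_1_l; reflexivity.
Qed.

Lemma is_integral_shift_period f a b v : a <= b -> (forall x, continuity_pt f x) -> periodic f ->
  is_integral f a b v -> is_integral f (a + 2 * PI) (b + 2 * PI) v.
Proof.
  intros h C P hv.
  destruct (is_integral_continuous f (a + 2 * PI) (b + 2 * PI) ltac:(lra) (fun x _ => C x)) as [w hw].
  enough (v = w) by (subst; exact hw).
  apply (is_integral_unique f a b); [exact hv |].
  apply (is_integral_ext (fun t => f (t + 2 * PI))); auto.
  apply is_integral_shift; auto.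
Qed.

Lemma is_integral_shift_PI f v : (forall x, continuity_pt f x) -> periodic f ->
  is_integral f 0 (2 * PI) v -> is_integral (fun t => f (t + PI)) 0 (2 * PI) v.
Proof.
  intros C P hv; pose proof PI_RGT_0.
  destruct (is_integral_continuous f 0 PI ltac:(lra) (fun x _ => C x)) as [A hA].
  destruct (is_integral_continuous f PI (2 * PI) ltac:(lra) (fun x _ => C x)) as [B hB].
  rewrite (is_integral_unique _ _ _ _ _ hv (is_integral_chasles _ _ _ _ _ _ hA hB)), Rplus_comm.
  apply (is_integral_chasles _ 0 PI).
  - apply is_integral_shift; auto; [lra |].
    replace (0 + PI) with PI by ring; replace (PI + PI) with (2 * PI) by ring; exact hB.
  - apply is_integral_shift; auto; [lra |].
    replace (PI + PI) with (0 + 2 * PI) by ring; replace (2 * PI + PI) with (PI + 2 * PI) by ring.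
    apply is_integral_shift_period; auto; lra.
Qed.

Lemma is_integral_double f v : (forall x, continuity_pt f x) -> periodic f ->
  is_integral f 0 (2 * PI) v -> is_integral (fun t => f (2 * t)) 0 (2 * PI) v.
Proof.
  intros C P hv; pose proof PI_RGT_0.
  pose proof (is_integral_shift_period f 0 (2 * PI) v ltac:(lra) C P hv) as h2.
  rewrite Rplus_0_l in h2.
  pose proof (is_integral_chasles _ _ _ _ _ _ hv h2) as h4.
  replace 0 with (2 * 0 + 0) in h4 by ring; replace (2 * PI + 2 * PI) with (2 * (2 * PI) + 0) in h4 by ring.
  pose proof (is_integral_affine f 0 (2 * PI) 2 0 (v + v) ltac:(lra) ltac:(lra) C h4) as H2.
  replace ((v + v) / 2) with v in H2 by field.
  apply (is_integral_ext (fun t => f (2 * t + 0))); auto; [lra |].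
  intros; rewrite Rplus_0_r; reflexivity.
Qed.

Lemma sin_sq_add_cos_sq t : sin t * sin t + cos t * cos t = 1.
Proof. exact (sin2_cos2 t). Qed.

(* [circle_quad a b t = |1 + (a + i b) e^{it}|^2]. *)
Definition circle_quad (a b t : R) : R := 1 + 2 * (a * cos t - b * sin t) + (a * a + b * b).

Lemma circle_quad_cross_le a b t : (a * cos t - b * sin t) * (a * cos t - b * sin t) <= a * a + b * b.
Proof.
  pose proof (sin_sq_add_cos_sq t); pose proof (Rle_0_sqr (a * sin t + b * cos t)); unfold Rsqr in *.
  nra.
Qed.

Lemma circle_quad_lower a b t s0 : a * a + b * b <= s0 -> s0 < 1 ->
  (1 - sqrt s0) * (1 - sqrt s0) <= circle_quad a b t.
Proof.
  intros hs hs0; unfold circle_quad; set (A := a * cos t - b * sin t).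
  pose proof (circle_quad_cross_le a b t) as hA2; fold A in hA2.
  assert (hA : Rabs A <= sqrt s0).
  { rewrite <- sqrt_Rsqr_abs; apply sqrt_le_1_alt; unfold Rsqr; lra. }
  assert (hs1 : sqrt s0 < 1) by (rewrite <- sqrt_1; apply sqrt_lt_1_alt; nra).
  pose proof (sqrt_pos s0); pose proof (Rabs_pos A).
  assert (h1 : (1 - Rabs A) * (1 - Rabs A) <= 1 + 2 * A + (a * a + b * b)).
  { assert (Rabs A * Rabs A = A * A) by (rewrite <- Rabs_mult; apply Rabs_right; nra).
    assert (- Rabs A <= A) by (pose proof (Rle_abs (- A)); rewrite Rabs_Ropp in *; lra).
    nra. }
  assert ((1 - sqrt s0) * (1 - sqrt s0) <= (1 - Rabs A) * (1 - Rabs A)) by (apply Rmult_le_compat; lra).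
  lra.
Qed.

Lemma circle_quad_le_4 a b t : a * a + b * b < 1 -> circle_quad a b t <= 4.
Proof. intros hs; unfold circle_quad; pose proof (circle_quad_cross_le a b t); nra. Qed.

Lemma circle_quad_pos a b t : a * a + b * b < 1 -> 0 < circle_quad a b t.
Proof.
  intros hs; pose proof (circle_quad_lower a b t _ (Rle_refl _) hs).
  assert (sqrt (a * a + b * b) < 1) by (rewrite <- sqrt_1; apply sqrt_lt_1_alt; nra).
  pose proof (sqrt_pos (a * a + b * b)); nra.
Qed.

Lemma ln_circle_quad_continuous a b t : a * a + b * b < 1 ->
  continuity_pt (fun t => ln (circle_quad a b t)) t.
Proof. intros hs; unfold circle_quad; reg; apply continuity_pt_ln, circle_quad_pos, hs. Qed.

Lemma ln_circle_quad_periodic a b : periodic (fun t => ln (circle_quad a b t)).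
Proof.
  intros t; unfold circle_quad; rewrite cos_plus, sin_plus, cos_2PI, sin_2PI; do 3 f_equal; ring.
Qed.

Lemma circle_quad_shift_PI a b t : circle_quad (- a) (- b) t = circle_quad a b (t + PI).
Proof. unfold circle_quad; rewrite neg_cos, neg_sin; ring. Qed.

(* [|1 + w e^{it}|^2 |1 - w e^{it}|^2 = |1 - w^2 e^{2it}|^2]. *)
Lemma circle_quad_mul a b t :
  circle_quad a b t * circle_quad (- a) (- b) t = circle_quad (b * b - a * a) (- (2 * a * b)) (2 * t).
Proof.
  pose proof (sin_sq_add_cos_sq t) as hsc.
  enough (E : circle_quad a b t * circle_quad (- a) (- b) t - circle_quad (b * b - a * a) (- (2 * a * b)) (2 * t)
              = 2 * (a * a + b * b) * (1 - (sin t * sin t + cos t * cos t)))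
    by (rewrite hsc in E; lra).
  unfold circle_quad; rewrite cos_2a, sin_2a; ring.
Qed.

Lemma mean_ln_circle_quad_square a b v v' : a * a + b * b < 1 ->
  is_integral (fun t => ln (circle_quad a b t)) 0 (2 * PI) v ->
  is_integral (fun t => ln (circle_quad (b * b - a * a) (- (2 * a * b)) t)) 0 (2 * PI) v' ->
  v = v' / 2.
Proof.
  intros hs hv hv'; pose proof PI_RGT_0.
  assert (hs' : (b * b - a * a) * (b * b - a * a) + - (2 * a * b) * - (2 * a * b) < 1)
    by (pose proof (Rle_0_sqr (a * a + b * b)); unfold Rsqr in *; nra).
  pose proof (is_integral_shift_PI _ v (fun t => ln_circle_quad_continuous a b t hs)
                (ln_circle_quad_periodic a b) hv) as hneg.
  pose proof (is_integral_plus_scal _ _ _ _ 1 _ _ hv hneg) as hsum.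
  assert (hsum' : is_integral (fun t => ln (circle_quad (b * b - a * a) (- (2 * a * b)) (2 * t))) 0 (2 * PI) (v + 1 * v)).
  { eapply is_integral_ext; [lra | | exact hsum]; intros t _.
    cbv beta; rewrite Rmult_1_l, <- circle_quad_shift_PI, <- ln_mult, circle_quad_mul; [reflexivity | |];
      apply circle_quad_pos; nra. }
  pose proof (is_integral_double _ v' (fun t => ln_circle_quad_continuous _ _ t hs')
                (ln_circle_quad_periodic _ _) hv') as hd.
  pose proof (is_integral_unique _ _ _ _ _ hsum' hd); lra.
Qed.

(* The squaring map [w |-> -w^2] keeps [|w| <= sqrt s0] and halves the mean, while
   [ln (circle_quad)] stays bounded by [ln 4 - ln ((1 - sqrt s0)^2)]. *)
Lemma mean_ln_circle_quad_abs_le s0 k a b v : 0 <= s0 < 1 -> a * a + b * b <= s0 ->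
  is_integral (fun t => ln (circle_quad a b t)) 0 (2 * PI) v ->
  Rabs v <= 2 * PI * (ln 4 - ln ((1 - sqrt s0) * (1 - sqrt s0))) / 2 ^ k.
Proof.
  intros hs0; pose proof PI_RGT_0.
  set (m0 := (1 - sqrt s0) * (1 - sqrt s0)); set (K := ln 4 - ln m0).
  assert (hq : sqrt s0 < 1) by (rewrite <- sqrt_1; apply sqrt_lt_1_alt; lra).
  pose proof (sqrt_pos s0).
  assert (hm0 : 0 < m0) by (unfold m0; nra).
  revert a b v; induction k as [| k IH]; intros a b v hs hv.
  - replace (2 * PI * K / 2 ^ 0) with (K * (2 * PI - 0)) by (simpl; field).
    assert (hb : forall t, - K <= ln (circle_quad a b t) <= K).
    { intros t; pose proof (circle_quad_lower a b t s0 hs ltac:(lra)) as hlo; fold m0 in hlo.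
      pose proof (circle_quad_le_4 a b t ltac:(lra)) as hup.
      pose proof (ln_le_ln _ _ hm0 hlo); pose proof (ln_le_ln (circle_quad a b t) 4 ltac:(lra) hup).
      assert (ln m0 <= ln 1) by (apply ln_le_ln; unfold m0; nra).
      assert (ln 1 <= ln 4) by (apply ln_le_ln; lra).
      rewrite ln_1 in *; unfold K; lra. }
    apply Rabs_le; split.
    + replace (- (K * (2 * PI - 0))) with (- K * (2 * PI - 0)) by ring.
      eapply is_integral_le; [| exact (is_integral_const (- K) 0 (2 * PI)) | exact hv |];
        [lra | intros; apply hb].
    + eapply is_integral_le; [| exact hv | exact (is_integral_const K 0 (2 * PI)) |];
        [lra | intros; apply hb].
  - set (a' := b * b - a * a); set (b' := - (2 * a * b)).
    assert (hs' : a' * a' + b' * b' <= s0) by (unfold a', b'; pose proof (Rle_0_sqr (a * a + b * b)); unfold Rsqr in *; nra).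
    destruct (is_integral_continuous (fun t => ln (circle_quad a' b' t)) 0 (2 * PI) ltac:(lra)
                (fun t _ => ln_circle_quad_continuous a' b' t ltac:(lra))) as [v' hv'].
    rewrite (mean_ln_circle_quad_square a b v v' ltac:(lra) hv hv').
    pose proof (IH a' b' v' hs' hv').
    unfold Rdiv; rewrite Rabs_mult, (Rabs_right (/ 2)) by lra; simpl.
    replace (2 * PI * K * / (2 * 2 ^ k)) with (2 * PI * K * / 2 ^ k * / 2) by (field; apply pow_nonzero; lra).
    apply Rmult_le_compat_r; lra.
Qed.

Lemma mean_ln_circle_quad a b v : a * a + b * b < 1 ->
  is_integral (fun t => ln (circle_quad a b t)) 0 (2 * PI) v -> v = 0.
Proof.
  intros hs hv; destruct (Req_dec v 0) as [e | e]; [exact e | exfalso].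
  set (K := 2 * PI * (ln 4 - ln ((1 - sqrt (a * a + b * b)) * (1 - sqrt (a * a + b * b))))).
  assert (hav : 0 < Rabs v) by (apply Rabs_pos_lt; exact e).
  destruct (pow2_unbounded (K / Rabs v)) as [k hk].
  pose proof (mean_ln_circle_quad_abs_le (a * a + b * b) k a b v ltac:(nra) (Rle_refl _) hv) as hle.
  fold K in hle; pose proof (pow_lt 2 k ltac:(lra)).
  apply Rlt_div_l_iff in hk; [| exact hav].
  assert (Rabs v * 2 ^ k <= K) by (apply (Rmult_le_compat_r (2 ^ k)) in hle; [| lra];
    unfold Rdiv in hle; rewrite Rmult_assoc, Rinv_l, Rmult_1_r in hle by lra; exact hle).
  lra.
Qed.

(** * Distances and truncated logarithms *)

Lemma sqrt_le_of x y : 0 <= y -> x <= y * y -> sqrt x <= y.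
Proof. intros hy h; rewrite <- (sqrt_square y) by exact hy; apply sqrt_le_1_alt; exact h. Qed.

Lemma sqrt_sum_sq_triangle u1 u2 v1 v2 :
  sqrt ((u1 + v1) * (u1 + v1) + (u2 + v2) * (u2 + v2)) <=
  sqrt (u1 * u1 + u2 * u2) + sqrt (v1 * v1 + v2 * v2).
Proof.
  set (A := sqrt (u1 * u1 + u2 * u2)); set (B := sqrt (v1 * v1 + v2 * v2)).
  assert (hA : A * A = u1 * u1 + u2 * u2) by (apply sqrt_sqrt; nra).
  assert (hB : B * B = v1 * v1 + v2 * v2) by (apply sqrt_sqrt; nra).
  assert (0 <= A) by apply sqrt_pos; assert (0 <= B) by apply sqrt_pos.
  assert (hcs : u1 * v1 + u2 * v2 <= A * B).
  { assert ((u1 * v1 + u2 * v2) * (u1 * v1 + u2 * v2) <= (A * B) * (A * B)).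
    { replace ((A * B) * (A * B)) with ((A * A) * (B * B)) by ring; rewrite hA, hB.
      pose proof (Rle_0_sqr (u1 * v2 - u2 * v1)); unfold Rsqr in *; nra. }
    assert (0 <= A * B) by nra; nra. }
  apply sqrt_le_of; nra.
Qed.

Lemma sqrt_sum_sq_le_abs x y : sqrt (x * x + y * y) <= Rabs x + Rabs y.
Proof.
  pose proof (Rabs_pos x); pose proof (Rabs_pos y).
  apply sqrt_le_of; [lra |].
  assert (Rabs x * Rabs x = x * x) by (rewrite <- Rabs_mult; apply Rabs_right; nra).
  assert (Rabs y * Rabs y = y * y) by (rewrite <- Rabs_mult; apply Rabs_right; nra).
  nra.
Qed.

Lemma cdist_eq z w :
  cdist z w = sqrt ((fst z - fst w) * (fst z - fst w) + (snd z - snd w) * (snd z - snd w)).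
Proof. unfold cdist; f_equal; ring. Qed.

Lemma cdist_nonneg z w : 0 <= cdist z w.
Proof. apply sqrt_pos. Qed.

Lemma cdist_sym z w : cdist z w = cdist w z.
Proof. rewrite !cdist_eq; f_equal; ring. Qed.

Lemma cdist_triangle z y x : cdist z x <= cdist z y + cdist y x.
Proof.
  rewrite !cdist_eq.
  replace (fst z - fst x) with ((fst z - fst y) + (fst y - fst x)) by ring.
  replace (snd z - snd x) with ((snd z - snd y) + (snd y - snd x)) by ring.
  apply sqrt_sum_sq_triangle.
Qed.

Lemma cdist_lipschitz z w p : Rabs (cdist z p - cdist w p) <= cdist z w.
Proof.
  pose proof (cdist_triangle z w p); pose proof (cdist_triangle w z p); rewrite (cdist_sym w z) in *.
  apply Rabs_le; lra.
Qed.

Lemma cdist_real_axis x y : cdist (x, 0) (y, 0) = Rabs (x - y).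
Proof.
  rewrite cdist_eq; simpl; rewrite <- sqrt_Rsqr_abs; unfold Rsqr; f_equal; ring.
Qed.

Definition circle_pt (w : R * R) (r t : R) : R * R := (fst w + r * cos t, snd w + r * sin t).

Lemma cdist_circle_pt_radius w r r' t : cdist (circle_pt w r t) (circle_pt w r' t) = Rabs (r - r').
Proof.
  rewrite cdist_eq, <- sqrt_Rsqr_abs; unfold circle_pt, Rsqr; simpl; f_equal.
  rewrite <- (Rmult_1_r ((r - r') * (r - r'))), <- (sin_sq_add_cos_sq t); ring.
Qed.

Lemma cdist_center_circle_pt w r t : cdist w (circle_pt w r t) = Rabs r.
Proof.
  rewrite cdist_eq, <- sqrt_Rsqr_abs; unfold circle_pt, Rsqr; simpl; f_equal.
  rewrite <- (Rmult_1_r (r * r)), <- (sin_sq_add_cos_sq t); ring.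
Qed.

Lemma cdist_circle_pt_angle w r t t0 :
  cdist (circle_pt w r t) (circle_pt w r t0) <= Rabs r * (Rabs (cos t - cos t0) + Rabs (sin t - sin t0)).
Proof.
  rewrite cdist_eq; unfold circle_pt; simpl.
  replace (fst w + r * cos t - (fst w + r * cos t0)) with (r * (cos t - cos t0)) by ring.
  replace (snd w + r * sin t - (snd w + r * sin t0)) with (r * (sin t - sin t0)) by ring.
  eapply Rle_trans; [apply sqrt_sum_sq_le_abs |]; rewrite !Rabs_mult; lra.
Qed.

Definition lipschitz (F : R * R -> R) (K : R) : Prop :=
  0 <= K /\ forall z z', Rabs (F z - F z') <= K * cdist z z'.

Lemma lipschitz_continuous_circle F K w r t0 : lipschitz F K ->
  continuity_pt (fun t => F (circle_pt w r t)) t0.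
Proof.
  intros [hK hF].
  set (g := fun t => K * (Rabs r * (Rabs (cos t - cos t0) + Rabs (sin t - sin t0)))).
  assert (gc : continuity_pt g t0) by (unfold g; reg).
  assert (g0 : g t0 = 0) by (unfold g; rewrite !Rminus_diag, Rabs_R0; ring).
  intros eps he; destruct (gc eps he) as [d [hd hh]]; exists d; split; [exact hd |].
  intros t ht; specialize (hh t ht); simpl in *; unfold R_dist in *; rewrite g0, Rminus_0_r in hh.
  eapply Rle_lt_trans; [apply hF |]; eapply Rle_lt_trans; [| exact hh].
  eapply Rle_trans; [apply Rmult_le_compat_l; [exact hK | apply cdist_circle_pt_angle] |].
  apply RRle_abs.
Qed.

Lemma lipschitz_plus_scal F G K K' c : lipschitz F K -> lipschitz G K' ->
  lipschitz (fun z => F z + c * G z) (K + Rabs c * K').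
Proof.
  intros [h1 h2] [h3 h4]; pose proof (Rabs_pos c); split; [nra |]; intros z z'.
  replace (F z + c * G z - (F z' + c * G z')) with ((F z - F z') + c * (G z - G z')) by ring.
  eapply Rle_trans; [apply Rabs_triang |]; rewrite Rabs_mult.
  pose proof (h2 z z'); pose proof (h4 z z'); pose proof (cdist_nonneg z z').
  assert (Rabs c * Rabs (G z - G z') <= Rabs c * (K' * cdist z z')) by (apply Rmult_le_compat_l; lra).
  nra.
Qed.

Lemma lipschitz_const c : lipschitz (fun _ => c) 0.
Proof. split; [lra |]; intros; rewrite Rminus_diag, Rabs_R0; lra. Qed.

(* [ln] is [1/l]-Lipschitz on [[l, +oo)]. *)
Lemma ln_Rmax_lipschitz X Y l : 0 < l -> Rabs (ln (Rmax X l) - ln (Rmax Y l)) <= Rabs (X - Y) / l.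
Proof.
  intros hl.
  assert (key : forall P Q, l <= Q -> Q <= P -> 0 <= ln P - ln Q <= (P - Q) / l).
  { intros P Q hQ hPQ.
    replace (ln P - ln Q) with (ln (P / Q))
      by (unfold Rdiv; rewrite ln_mult, ln_Rinv by (try apply Rinv_0_lt_compat; lra); ring).
    assert (hPQ1 : 1 <= P / Q) by (apply Rmult_le_reg_r with Q; [lra |]; field_simplify; lra).
    split; [rewrite <- ln_1; apply ln_le_ln; lra |].
    eapply Rle_trans; [apply ln_le_sub_1; lra |].
    replace (P / Q - 1) with ((P - Q) / Q) by (field; lra).
    apply Rmult_le_compat_l; [lra | apply Rinv_le_contravar; lra]. }
  assert (hm : Rabs (Rmax X l - Rmax Y l) <= Rabs (X - Y)).
  { unfold Rmax; destruct (Rle_dec X l); destruct (Rle_dec Y l); apply Rabs_le;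
      pose proof (Rle_abs (X - Y)); pose proof (Rle_abs (- (X - Y))); rewrite Rabs_Ropp in *; lra. }
  pose proof (Rmax_r X l) as hXl; pose proof (Rmax_r Y l) as hYl.
  assert (0 < / l) by (apply Rinv_0_lt_compat; lra).
  destruct (Rle_or_lt (Rmax Y l) (Rmax X l)) as [h | h].
  - pose proof (key _ _ hYl h); rewrite Rabs_right in hm |- * by lra.
    apply Rle_trans with ((Rmax X l - Rmax Y l) / l); [lra | apply Rmult_le_compat_r; lra].
  - pose proof (key _ _ hXl (Rlt_le _ _ h)); rewrite Rabs_left1 in hm |- * by lra.
    apply Rle_trans with ((Rmax Y l - Rmax X l) / l); [lra | apply Rmult_le_compat_r; lra].
Qed.

Lemma mean_ln_of_circle_quad (D : R -> R) k a b : 0 < k -> a * a + b * b < 1 ->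
  (forall t, D t * D t = k * k * circle_quad a b t) -> (forall t, 0 <= D t) ->
  is_integral (fun t => ln (D t)) 0 (2 * PI) (2 * PI * ln k).
Proof.
  intros hk hs hD hD0; pose proof PI_RGT_0.
  destruct (is_integral_continuous (fun t => ln (circle_quad a b t)) 0 (2 * PI) ltac:(lra)
              (fun t _ => ln_circle_quad_continuous a b t hs)) as [v hv].
  rewrite (mean_ln_circle_quad a b v hs hv) in hv.
  pose proof (is_integral_plus_scal _ _ _ _ (/ 2) _ _ (is_integral_const (ln k) 0 (2 * PI)) hv) as H1.
  replace (ln k * (2 * PI - 0) + / 2 * 0) with (2 * PI * ln k) in H1 by ring.
  eapply is_integral_ext; [lra | | exact H1]; intros t _; cbv beta.
  pose proof (circle_quad_pos a b t hs).
  assert (0 < k * k) by nra.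
  assert (hDt : 0 < D t).
  { destruct (hD0 t) as [h | h]; [exact h |]; pose proof (hD t); rewrite <- h in *; nra. }
  pose proof (f_equal ln (hD t)) as E; rewrite !ln_mult in E by nra; lra.
Qed.

Lemma mean_ln_cdist_circle w a r : 0 <= r -> r <> cdist w (a, 0) ->
  is_integral (fun t => ln (cdist (circle_pt w r t) (a, 0))) 0 (2 * PI)
    (2 * PI * ln (Rmax r (cdist w (a, 0)))).
Proof.
  intros hr hne.
  set (c1 := fst w - a); set (c2 := snd w); set (S := c1 * c1 + c2 * c2).
  assert (hrho : cdist w (a, 0) = sqrt S) by (rewrite cdist_eq; unfold S, c1, c2; simpl; f_equal; ring).
  rewrite hrho in *; set (rho := sqrt S) in *.
  assert (hS : 0 <= S) by (unfold S; nra).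
  assert (hrho2 : rho * rho = S) by (apply sqrt_sqrt; lra).
  assert (0 <= rho) by apply sqrt_pos.
  assert (hdist : forall t, cdist (circle_pt w r t) (a, 0) * cdist (circle_pt w r t) (a, 0)
                   = S + 2 * r * (c1 * cos t + c2 * sin t) + r * r).
  { intros t; unfold cdist, circle_pt; cbn [fst snd].
    rewrite sqrt_sqrt by (apply Rplus_le_le_0_compat; apply pow2_ge_0).
    rewrite <- (Rmult_1_r (r * r)), <- (sin_sq_add_cos_sq t); unfold S, c1, c2; ring. }
  destruct (Rlt_or_le r rho) as [h | h].
  - rewrite Rmax_right by lra.
    assert (hS0 : 0 < S) by nra.
    apply (mean_ln_of_circle_quad _ rho (r * c1 / S) (- (r * c2 / S))); [lra | | | intros; apply cdist_nonneg].
    + replace (r * c1 / S * (r * c1 / S) + - (r * c2 / S) * - (r * c2 / S)) with (r * r / S) by (unfold S in *; field; lra).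
      apply Rlt_div_l_iff; nra.
    + intros t; rewrite hdist, hrho2; unfold circle_quad.
      transitivity (S + 2 * r * (c1 * cos t + c2 * sin t) + r * r * (c1 * c1 + c2 * c2) / S);
        [fold S | ]; field; lra.
  - assert (hr' : rho < r) by lra.
    rewrite Rmax_left by lra.
    apply (mean_ln_of_circle_quad _ r (c1 / r) (- (c2 / r))); [lra | | | intros; apply cdist_nonneg].
    + replace (c1 / r * (c1 / r) + - (c2 / r) * - (c2 / r)) with (S / (r * r)) by (unfold S; field; lra).
      apply Rlt_div_l_iff; nra.
    + intros t; rewrite hdist; unfold circle_quad; unfold S; field; lra.
Qed.

Definition trunc_log (a L : R) (z : R * R) : R := ln (Rmax (cdist z (a, 0)) (exp L)).

Lemma trunc_log_lipschitz a L : lipschitz (trunc_log a L) (/ exp L).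
Proof.
  pose proof (exp_pos L); split; [left; apply Rinv_0_lt_compat; lra |]; intros z z'.
  eapply Rle_trans; [apply ln_Rmax_lipschitz; lra |].
  unfold Rdiv; rewrite Rmult_comm; apply Rmult_le_compat_l; [left; apply Rinv_0_lt_compat; lra |].
  apply cdist_lipschitz.
Qed.

Lemma lipschitz_mean_radius F K w r r' V V' : lipschitz F K ->
  is_integral (fun t => F (circle_pt w r t)) 0 (2 * PI) V ->
  is_integral (fun t => F (circle_pt w r' t)) 0 (2 * PI) V' ->
  V' <= V + 2 * PI * (K * Rabs (r' - r)).
Proof.
  intros [hK hF] hV hV'; pose proof PI_RGT_0.
  pose proof (is_integral_plus_scal _ _ _ _ 1 _ _ hV (is_integral_const (K * Rabs (r' - r)) 0 (2 * PI))) as hsum.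
  replace (V + 2 * PI * (K * Rabs (r' - r))) with (V + 1 * (K * Rabs (r' - r) * (2 * PI - 0))) by ring.
  eapply is_integral_le; [| exact hV' | exact hsum |]; [lra |]; intros t _.
  specialize (hF (circle_pt w r' t) (circle_pt w r t)); rewrite cdist_circle_pt_radius in hF.
  pose proof (Rle_abs (F (circle_pt w r' t) - F (circle_pt w r t))); lra.
Qed.

(* Off the critical circle [|z - w| = |w - a|], [ln |z - a|] already has mean [>= ln |w - a|]
   and it bounds [trunc_log] from below once [|w - a| > e^L]. *)
Lemma trunc_log_mean_off_circle a L w r V : exp L < cdist w (a, 0) -> 0 <= r -> r <> cdist w (a, 0) ->
  is_integral (fun t => trunc_log a L (circle_pt w r t)) 0 (2 * PI) V ->
  2 * PI * ln (cdist w (a, 0)) <= V.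
Proof.
  intros hl hr hne hV; pose proof PI_RGT_0; pose proof (exp_pos L).
  set (rho := cdist w (a, 0)) in *.
  pose proof (mean_ln_cdist_circle w a r hr hne) as M; fold rho in M.
  assert (hD : forall t, Rabs (rho - r) <= cdist (circle_pt w r t) (a, 0)).
  { intros t; pose proof (cdist_triangle w (circle_pt w r t) (a, 0)) as T1.
    pose proof (cdist_triangle w (a, 0) (circle_pt w r t)) as T2.
    rewrite cdist_center_circle_pt in T1, T2; rewrite (cdist_sym (a, 0)) in T2; fold rho in T1, T2.
    rewrite Rabs_right in T1, T2 by lra; apply Rabs_le; lra. }
  assert (hpos : 0 < Rabs (rho - r)) by (apply Rabs_pos_lt; lra).
  assert (2 * PI * ln (Rmax r rho) <= V).
  { eapply is_integral_le; [| exact M | exact hV |]; [lra |]; intros t _; unfold trunc_log.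
    apply ln_le_ln; [pose proof (hD t); lra | apply Rmax_l]. }
  assert (ln rho <= ln (Rmax r rho)) by (apply ln_le_ln; [lra | apply Rmax_r]).
  nra.
Qed.

(* On the critical circle, compare with the nearby radii [|w - a| - eta]. *)
Lemma trunc_log_submean a L w r V : 0 <= r ->
  is_integral (fun t => trunc_log a L (circle_pt w r t)) 0 (2 * PI) V ->
  2 * PI * trunc_log a L w <= V.
Proof.
  intros hr hV; pose proof PI_RGT_0; pose proof (exp_pos L).
  set (rho := cdist w (a, 0)); assert (0 <= rho) by apply cdist_nonneg.
  unfold trunc_log at 1; fold rho.
  destruct (Rle_or_lt rho (exp L)) as [h | h].
  - rewrite Rmax_right by lra.
    replace (2 * PI * ln (exp L)) with (ln (exp L) * (2 * PI - 0)) by ring.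
    eapply is_integral_le; [| exact (is_integral_const _ 0 (2 * PI)) | exact hV |]; [lra |].
    intros t _; apply ln_le_ln; [lra | apply Rmax_r].
  - rewrite Rmax_left by lra.
    destruct (Req_dec r rho) as [-> | hne]; [| exact (trunc_log_mean_off_circle a L w r V h hr hne hV)].
    apply Rle_plus_epsilon; intros eps heps.
    set (eta := Rmin (rho / 2) (eps * exp L / (2 * PI))).
    assert (heta : 0 < eta /\ eta <= rho / 2 /\ eta <= eps * exp L / (2 * PI)).
    { unfold eta; pose proof (Rmin_l (rho / 2) (eps * exp L / (2 * PI))).
      pose proof (Rmin_r (rho / 2) (eps * exp L / (2 * PI))).
      split; [apply Rmin_glb_lt; [lra | apply Rdiv_lt_0_compat; nra] | lra]. }
    destruct (is_integral_continuous (fun t => trunc_log a L (circle_pt w (rho - eta) t)) 0 (2 * PI) ltac:(lra)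
                (fun t _ => lipschitz_continuous_circle _ _ w (rho - eta) t (trunc_log_lipschitz a L))) as [V' hV'].
    destruct heta as [he1 [he2 he3]].
    pose proof (trunc_log_mean_off_circle a L w (rho - eta) V' h ltac:(lra) ltac:(fold rho; intro; lra) hV')
      as hV'ge; fold rho in hV'ge.
    pose proof (lipschitz_mean_radius _ _ w rho (rho - eta) V V' (trunc_log_lipschitz a L) hV hV') as hV'le.
    replace (rho - eta - rho) with (- eta) in hV'le by ring; rewrite Rabs_Ropp, Rabs_right in hV'le by lra.
    assert (2 * PI * (/ exp L * eta) <= eps).
    { apply (Rmult_le_reg_r (exp L)); [lra |].
      replace (2 * PI * (/ exp L * eta) * exp L) with (2 * PI * eta) by (field; lra).
      apply (Rmult_le_compat_l (2 * PI)) in he3; [| lra].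
      replace (2 * PI * (eps * exp L / (2 * PI))) with (eps * exp L) in he3 by (field; lra); lra. }
    lra.
Qed.

(** * The potentials *)

Fixpoint sum_below (f : nat -> R) (n : nat) : R :=
  match n with O => 0 | S n => sum_below f n + f n end.

Lemma sum_below_le f g n : (forall i, (i < n)%nat -> f i <= g i) -> sum_below f n <= sum_below g n.
Proof.
  induction n as [| n IH]; intros H; simpl; [lra |].
  pose proof (H n ltac:(lia)); assert (sum_below f n <= sum_below g n) by (apply IH; intros; apply H; lia).
  lra.
Qed.

Lemma sum_below_le_const f n c : (forall i, (i < n)%nat -> f i <= c) -> sum_below f n <= INR n * c.
Proof.
  induction n as [| n IH]; intros H; simpl sum_below; [simpl; lra |]; rewrite S_INR.
  pose proof (H n ltac:(lia)); assert (sum_below f n <= INR n * c) by (apply IH; intros; apply H; lia).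
  lra.
Qed.

Lemma sum_below_nonneg f n : (forall i, (i < n)%nat -> 0 <= f i) -> 0 <= sum_below f n.
Proof.
  induction n as [| n IH]; intros H; simpl; [lra |].
  pose proof (H n ltac:(lia)); assert (0 <= sum_below f n) by (apply IH; intros; apply H; lia).
  lra.
Qed.

Lemma sum_below_le_term f n j : (forall i, (i < n)%nat -> f i <= 0) -> (j < n)%nat -> sum_below f n <= f j.
Proof.
  intros H hj; induction n as [| n IH]; [lia |]; simpl.
  assert (sum_below f n <= 0).
  { rewrite <- (Rmult_0_r (INR n)); apply sum_below_le_const; intros; apply H; lia. }
  destruct (Nat.eq_dec j n) as [-> | e]; [lra |].
  pose proof (H n ltac:(lia)); assert (sum_below f n <= f j) by (apply IH; [intros; apply H |]; lia).
  lra.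
Qed.

Definition submean_on_circles (F : R * R -> R) : Prop :=
  forall w r V, 0 <= r -> is_integral (fun t => F (circle_pt w r t)) 0 (2 * PI) V -> 2 * PI * F w <= V.

Definition lip_subharmonic (F : R * R -> R) : Prop := submean_on_circles F /\ exists K, lipschitz F K.

Lemma lip_subharmonic_integral F w r : lip_subharmonic F ->
  exists V, is_integral (fun t => F (circle_pt w r t)) 0 (2 * PI) V.
Proof.
  intros [_ [K hK]]; pose proof PI_RGT_0.
  apply is_integral_continuous; [lra |]; intros t _; exact (lipschitz_continuous_circle _ _ _ _ _ hK).
Qed.

Lemma lip_subharmonic_plus_scal F G c : 0 <= c -> lip_subharmonic F -> lip_subharmonic G ->
  lip_subharmonic (fun z => F z + c * G z).
Proof.
  intros hc hF hG; split.
  - intros w r V hr hV.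
    destruct (lip_subharmonic_integral F w r hF) as [V1 h1]; destruct (lip_subharmonic_integral G w r hG) as [V2 h2].
    rewrite (is_integral_unique _ _ _ _ _ hV (is_integral_plus_scal _ _ _ _ c _ _ h1 h2)).
    pose proof (proj1 hF w r V1 hr h1); pose proof (proj1 hG w r V2 hr h2); nra.
  - destruct hF as [_ [K1 h1]]; destruct hG as [_ [K2 h2]]; eexists; apply lipschitz_plus_scal; eauto.
Qed.

Lemma lip_subharmonic_const k : lip_subharmonic (fun _ => k).
Proof.
  split; [| exists 0; apply lipschitz_const].
  intros w r V hr hV; rewrite (is_integral_unique _ _ _ _ _ hV (is_integral_const k 0 (2 * PI))); lra.
Qed.

Lemma lip_subharmonic_ext F G : (forall z, F z = G z) -> lip_subharmonic F -> lip_subharmonic G.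
Proof.
  intros e [h1 [K [hK h2]]]; split.
  - intros w r V hr hV; rewrite <- e; apply (h1 w r V hr); pose proof PI_RGT_0.
    eapply is_integral_ext; [lra | | exact hV]; intros; cbv beta; auto.
  - exists K; split; [exact hK |]; intros; rewrite <- !e; auto.
Qed.

Lemma lip_subharmonic_scal F c : 0 <= c -> lip_subharmonic F -> lip_subharmonic (fun z => c * F z).
Proof.
  intros hc hF; apply (lip_subharmonic_ext (fun z => 0 + c * F z)); [intros; ring |].
  apply lip_subharmonic_plus_scal; [exact hc | apply lip_subharmonic_const | exact hF].
Qed.

Lemma lip_subharmonic_sum (f : nat -> R * R -> R) n : (forall i, lip_subharmonic (f i)) ->
  lip_subharmonic (fun z => sum_below (fun i => f i z) n).
Proof.
  intros H; induction n as [| n IH]; simpl; [apply lip_subharmonic_const |].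
  apply (lip_subharmonic_ext (fun z => sum_below (fun i => f i z) n + 1 * f n z)); [intros; ring |].
  apply lip_subharmonic_plus_scal; auto; lra.
Qed.

Lemma lip_subharmonic_trunc_log a L : lip_subharmonic (trunc_log a L).
Proof.
  split; [| exists (/ exp L); apply trunc_log_lipschitz].
  intros w r V; apply trunc_log_submean.
Qed.

Definition row_log (n : nat) (L : R) (z : R * R) : R :=
  sum_below (fun j => trunc_log (INR (S j) / INR n) L z) n.

Definition log_bound (z : R * R) : R := trunc_log (1 / 2) 0 z + 1.

Definition weight (N : nat) : R := / sqrt (INR (S N)).

Definition coef (i : nat) : R := (weight i - weight (S i)) / INR (S i).

(* The potentials decrease in [N]: lowering the truncation level to [-N] only lowers the
   old rows, and the new row [coef N * row_log (N+1)] is at most [(weight N - weight (N+1)) * log_bound]. *)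
Definition potential (N : nat) (z : R * R) : R :=
  sum_below (fun i => coef i * row_log (S i) (- INR N) z) N + weight N * log_bound z.

Lemma weight_pos N : 0 < weight N.
Proof. apply Rinv_0_lt_compat, sqrt_lt_R0, lt_0_INR; lia. Qed.

Lemma weight_le_1 N : weight N <= 1.
Proof.
  unfold weight; rewrite <- Rinv_1; apply Rinv_le_contravar; [lra |].
  rewrite <- sqrt_1; apply sqrt_le_1_alt, (le_INR 1); lia.
Qed.

Lemma coef_nonneg i : 0 <= coef i.
Proof.
  unfold coef, weight.
  assert (/ sqrt (INR (S (S i))) <= / sqrt (INR (S i))).
  { apply Rinv_le_contravar; [apply sqrt_lt_R0, lt_0_INR; lia |]; apply sqrt_le_1_alt, le_INR; lia. }
  apply Rmult_le_pos; [lra |]; left; apply Rinv_0_lt_compat, lt_0_INR; lia.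
Qed.

Lemma coef_mul i : INR (S i) * coef i = weight i - weight (S i).
Proof. unfold coef; field; apply not_0_INR; lia. Qed.

Lemma lip_subharmonic_potential N : lip_subharmonic (potential N).
Proof.
  apply lip_subharmonic_plus_scal; [left; apply weight_pos | |].
  - apply (lip_subharmonic_sum (fun i z => coef i * row_log (S i) (- INR N) z)); intros i.
    apply lip_subharmonic_scal; [apply coef_nonneg |].
    apply (lip_subharmonic_sum (fun j => trunc_log (INR (S j) / INR (S i)) (- INR N))); intros.
    apply lip_subharmonic_trunc_log.
  - apply (lip_subharmonic_ext (fun z => 1 + 1 * trunc_log (1 / 2) 0 z)); [intros; unfold log_bound; ring |].
    apply lip_subharmonic_plus_scal; [lra | apply lip_subharmonic_const | apply lip_subharmonic_trunc_log].
Qed.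

Lemma trunc_log_le_level a L L' z : L <= L' -> trunc_log a L z <= trunc_log a L' z.
Proof.
  intros h; unfold trunc_log; pose proof (exp_pos L); pose proof (Rmax_r (cdist z (a, 0)) (exp L)).
  apply ln_le_ln; [lra |]; apply Rmax_lub; [apply Rmax_l |].
  eapply Rle_trans; [| apply Rmax_r]; destruct h as [h | ->]; [left; apply exp_increasing, h | lra].
Qed.

Lemma trunc_log_le_log_bound a L z : 0 <= a <= 1 -> L <= 0 -> trunc_log a L z <= log_bound z.
Proof.
  intros ha hL; unfold log_bound, trunc_log; rewrite exp_0.
  set (M := Rmax (cdist z (1 / 2, 0)) 1).
  assert (hM1 : 1 <= M) by apply Rmax_r; assert (hMd : cdist z (1 / 2, 0) <= M) by apply Rmax_l.
  assert (hd : cdist z (a, 0) <= cdist z (1 / 2, 0) + 1 / 2).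
  { pose proof (cdist_triangle z (1 / 2, 0) (a, 0)) as htri; rewrite cdist_real_axis in htri.
    assert (Rabs (1 / 2 - a) <= 1 / 2) by (apply Rabs_le; lra); lra. }
  assert (exp L <= 1) by (rewrite <- exp_0; destruct hL as [hL | ->]; [left; apply exp_increasing |]; lra).
  assert (hpos : 0 < Rmax (cdist z (a, 0)) (exp L)) by (eapply Rlt_le_trans; [apply (exp_pos L) | apply Rmax_r]).
  pose proof (exp_ineq1 1 ltac:(lra)).
  assert (hln : ln (Rmax (cdist z (a, 0)) (exp L)) <= ln (exp 1 * M)).
  { apply ln_le_ln; [lra |]; apply Rmax_lub; nra. }
  rewrite ln_mult, ln_exp in hln by (try apply exp_pos; lra); lra.
Qed.

Lemma row_log_le n L z : (1 <= n)%nat -> L <= 0 -> row_log n L z <= INR n * log_bound z.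
Proof.
  intros hn hL; apply sum_below_le_const; intros j hj; apply trunc_log_le_log_bound; [| exact hL].
  assert (0 < INR n) by (apply lt_0_INR; lia).
  split; [apply Rmult_le_pos; [apply pos_INR | left; apply Rinv_0_lt_compat; lra] |].
  apply (Rmult_le_reg_r (INR n)); [lra |].
  unfold Rdiv; rewrite Rmult_assoc, Rinv_l, Rmult_1_r, Rmult_1_l by lra; apply le_INR; lia.
Qed.

Lemma potential_le_S N z : potential (S N) z <= potential N z.
Proof.
  unfold potential; cbn [sum_below].
  assert (sum_below (fun i => coef i * row_log (S i) (- INR (S N)) z) N <=
          sum_below (fun i => coef i * row_log (S i) (- INR N) z) N).
  { apply sum_below_le; intros i _; apply Rmult_le_compat_l; [apply coef_nonneg |].
    apply sum_below_le; intros; apply trunc_log_le_level; rewrite S_INR; lra. }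
  assert (hnew : coef N * row_log (S N) (- INR (S N)) z <= coef N * (INR (S N) * log_bound z)).
  { apply Rmult_le_compat_l; [apply coef_nonneg |]; apply row_log_le; [lia |].
    pose proof (pos_INR (S N)); lra. }
  replace (coef N * (INR (S N) * log_bound z)) with ((weight N - weight (S N)) * log_bound z) in hnew
    by (rewrite <- coef_mul; ring).
  lra.
Qed.

Lemma potential_antitone N M z : (N <= M)%nat -> potential M z <= potential N z.
Proof. induction 1 as [| M _ IH]; [lra | pose proof (potential_le_S M z); lra]. Qed.

(** * Polarity *)

Lemma dini (h : nat -> R -> R) a b : a <= b ->
  (forall N t, continuity_pt (h N) t) ->
  (forall N M t, (N <= M)%nat -> h M t <= h N t) ->
  (forall t, a <= t <= b -> exists N, h N t < 0) ->
  exists N, forall t, a <= t <= b -> h N t < 0.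
Proof.
  intros hab hc hm hp.
  set (E := fun s => a <= s <= b /\ exists N, forall t, a <= t <= s -> h N t < 0).
  assert (Ea : E a).
  { split; [lra |]; destruct (hp a ltac:(lra)) as [N hN]; exists N; intros t ht; replace t with a by lra; exact hN. }
  destruct (completeness E) as [sig [hub hlub]]; [exists b; intros s [hs _]; lra | exists a; exact Ea |].
  assert (hs1 : a <= sig) by (apply hub; exact Ea).
  assert (hs2 : sig <= b) by (apply hlub; intros s [hs _]; lra).
  destruct (hp sig ltac:(lra)) as [N0 hN0].
  destruct (hc N0 sig (- h N0 sig) ltac:(lra)) as [d [hd hdd]].
  assert (hnear : forall t, Rabs (t - sig) < d -> h N0 t < 0).
  { intros t ht; destruct (Req_dec t sig) as [-> | e]; [exact hN0 |].
    assert (hh := hdd t (conj (conj I (fun e2 => e (eq_sym e2))) ht)); simpl in hh; unfold R_dist in hh.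
    apply Rabs_def2 in hh; lra. }
  destruct (classic (exists s, E s /\ sig - d < s)) as [[s [[_ [N1 hN1]] hs]] | hno].
  - set (m := Rmin b (sig + d / 2)).
    assert (hmb : m <= b) by apply Rmin_l; assert (hms : m <= sig + d / 2) by apply Rmin_r.
    assert (hEm : E m).
    { split; [split; [apply Rmin_glb |]; lra |].
      exists (Nat.max N0 N1); intros t ht; destruct (Rle_or_lt t s) as [h1 | h1].
      - eapply Rle_lt_trans; [apply hm, Nat.le_max_r | apply hN1; lra].
      - eapply Rle_lt_trans; [apply hm, Nat.le_max_l | apply hnear, Rabs_def1; lra]. }
    assert (hmb' : m = b) by (pose proof (hub m hEm); unfold m in *; unfold Rmin in *;
      destruct (Rle_dec b (sig + d / 2)); lra).
    rewrite hmb' in hEm; destruct hEm as [_ hb]; exact hb.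
  - enough (sig <= sig - d) by lra.
    apply hlub; intros s hs; destruct (Rle_or_lt s (sig - d)) as [h1 | h1]; [exact h1 |].
    exfalso; apply hno; eauto.
Qed.

Definition is_inf_seq (f : nat -> R) (v : R) : Prop :=
  (forall N, v <= f N) /\ (forall eps, 0 < eps -> exists N, f N < v + eps).

Lemma inf_seq_or_unbounded (f : nat -> R) : (exists v, is_inf_seq f v) \/ (forall K, exists N, f N < K).
Proof.
  destruct (classic (forall K, exists N, f N < K)) as [h | h]; [right; exact h | left].
  apply not_all_ex_not in h as [K hK].
  assert (hK' : forall N, K <= f N) by (intros N; destruct (Rle_or_lt K (f N)); [assumption | exfalso; eauto]).
  destruct (completeness (fun y => exists N, y = - f N)) as [m [hub hlub]].
  { exists (- K); intros y [N ->]; specialize (hK' N); lra. }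
  { exists (- f 0%nat), 0%nat; reflexivity. }
  exists (- m); split.
  - intros N; specialize (hub (- f N) (ex_intro _ N eq_refl)); lra.
  - intros eps he; apply NNPP; intros hno.
    enough (m <= m - eps) by lra.
    apply hlub; intros y [N ->]; destruct (Rle_or_lt (- m + eps) (f N)) as [h1 | h1]; [lra |].
    exfalso; apply hno; eauto.
Qed.

Definition inf_potential (z : R * R) : option R :=
  match excluded_middle_informative (exists v, is_inf_seq (fun N => potential N z) v) with
  | left h => Some (proj1_sig (constructive_indefinite_description _ h))
  | right _ => None
  end.

Lemma inf_potential_cases z :
  (exists v, inf_potential z = Some v /\ is_inf_seq (fun N => potential N z) v) \/
  (inf_potential z = None /\ forall K, exists N, potential N z < K).
Proof.
  unfold inf_potential; destruct (excluded_middle_informative _) as [h | h].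
  - left; eexists; split; [reflexivity | exact (proj2_sig (constructive_indefinite_description _ h))].
  - right; split; [reflexivity |].
    destruct (inf_seq_or_unbounded (fun N => potential N z)) as [h' | h']; [contradiction | exact h'].
Qed.

Lemma inf_potential_lt z c : ext_lt (inf_potential z) c -> exists N, potential N z < c.
Proof.
  destruct (inf_potential_cases z) as [[v [-> [_ hinf]]] | [-> hK]]; simpl; intros h; [| apply hK].
  destruct (hinf (c - v) ltac:(lra)) as [N hN]; exists N; lra.
Qed.

Lemma inf_potential_le z N : ext_le (inf_potential z) (potential N z).
Proof. destruct (inf_potential_cases z) as [[v [-> [hlb _]]] | [-> _]]; simpl; auto. Qed.

Lemma inf_potential_usc : usc inf_potential.
Proof.
  intros z c h; destruct (inf_potential_lt z c h) as [N hN].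
  destruct (lip_subharmonic_potential N) as [_ [K [hK hL]]].
  set (eps := (c - potential N z) / (K + 1)).
  assert (heps : 0 < eps) by (apply Rdiv_lt_0_compat; lra).
  exists eps; split; [exact heps |]; intros w hw.
  assert (potential N w < c).
  { pose proof (hL w z) as hLwz; rewrite cdist_sym in hLwz; pose proof (Rle_abs (potential N w - potential N z)).
    assert (K * cdist z w <= K * eps) by (apply Rmult_le_compat_l; lra).
    assert (K * eps < c - potential N z).
    { apply (Rmult_lt_reg_r (K + 1)); [lra |]; unfold eps, Rdiv.
      replace (K * ((c - potential N z) * / (K + 1)) * (K + 1)) with (K * (c - potential N z)) by (field; lra).
      nra. }
    lra. }
  pose proof (inf_potential_le w N); destruct (inf_potential w); simpl in *; auto; lra.
Qed.

Lemma potential_below_majorant w r (g : R -> R) eps : continuity g -> 0 < eps ->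
  (forall t, 0 <= t <= 2 * PI -> ext_le (inf_potential (circle_pt w r t)) (g t)) ->
  exists N, forall t, 0 <= t <= 2 * PI -> potential N (circle_pt w r t) < g t + eps.
Proof.
  intros gc heps hg; pose proof PI_RGT_0.
  destruct (dini (fun N t => potential N (circle_pt w r t) - g t - eps) 0 (2 * PI) ltac:(lra)) as [N hN].
  - intros N t; destruct (lip_subharmonic_potential N) as [_ [K hK]].
    exact (continuity_pt_minus _ _ t
             (continuity_pt_minus _ _ t (lipschitz_continuous_circle _ _ w r t hK) (gc t))
             (continuity_pt_const (fun _ => eps) t (fun _ _ => eq_refl))).
  - intros N M t hNM; pose proof (potential_antitone N M (circle_pt w r t) hNM); lra.
  - intros t ht; destruct (inf_potential_lt (circle_pt w r t) (g t + eps)) as [N hN].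
    + pose proof (hg t ht); destruct (inf_potential (circle_pt w r t)); simpl in *; auto; lra.
    + exists N; lra.
  - exists N; intros t ht; specialize (hN t ht); lra.
Qed.

Lemma inf_potential_submean : submean inf_potential.
Proof.
  intros w; exists 1; split; [lra |]; intros r hr g pr gc hg; pose proof PI_RGT_0.
  destruct (inf_potential_cases w) as [[v [-> [hlb _]]] | [-> _]]; simpl; [| exact I].
  apply Rle_plus_epsilon; intros eps heps.
  destruct (potential_below_majorant w r g eps gc heps hg) as [N hN].
  destruct (lip_subharmonic_integral (potential N) w r (lip_subharmonic_potential N)) as [V hV].
  pose proof (proj1 (lip_subharmonic_potential N) w r V ltac:(lra) hV).
  assert (hgI : is_integral g 0 (2 * PI) (RiemannInt pr)) by (exists pr; reflexivity).
  assert (V <= RiemannInt pr + 1 * (eps * (2 * PI - 0))).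
  { eapply is_integral_le; [| exact hV | exact (is_integral_plus_scal _ _ _ _ 1 _ _ hgI (is_integral_const eps 0 (2 * PI))) |];
      [lra |]; intros t ht; pose proof (hN t ltac:(lra)); lra. }
  specialize (hlb N).
  apply (Rmult_le_reg_l (2 * PI)); [lra |].
  replace (2 * PI * (RiemannInt pr / (2 * PI) + eps)) with (RiemannInt pr + eps * (2 * PI)) by (field; lra).
  nra.
Qed.

Lemma potential_nonneg_at_2i N : 0 <= potential N (0, 2).
Proof.
  assert (hb : forall a L, 0 <= trunc_log a L (0, 2)).
  { intros a L.
    assert (h1 : 1 <= cdist (0, 2) (a, 0)).
    { rewrite cdist_eq; simpl; rewrite <- sqrt_1 at 1; apply sqrt_le_1_alt.
      pose proof (Rle_0_sqr (0 - a)); unfold Rsqr in *; lra. }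
    unfold trunc_log; rewrite <- ln_1 at 1; apply ln_le_ln; [lra |].
    eapply Rle_trans; [exact h1 | apply Rmax_l]. }
  apply Rplus_le_le_0_compat.
  - apply sum_below_nonneg; intros i _; apply Rmult_le_pos; [apply coef_nonneg |].
    apply sum_below_nonneg; intros; apply hb.
  - apply Rmult_le_pos; [left; apply weight_pos |]; unfold log_bound; pose proof (hb (1 / 2) 0); lra.
Qed.

Lemma inf_potential_not_minus_infinity : exists z, inf_potential z <> None.
Proof.
  exists (0, 2); destruct (inf_potential_cases (0, 2)) as [[v [-> _]] | [_ hK]]; [discriminate |].
  destruct (hK 0) as [N hN]; pose proof (potential_nonneg_at_2i N); lra.
Qed.

(* [coef i = 1 / (sqrt n sqrt (n+1) (sqrt n + sqrt (n+1)) n)] with [n = i + 1]. *)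
Lemma coef_cube_ge i : sqrt (INR (S i)) / 6 <= coef i * INR (S i) ^ 3.
Proof.
  set (n := INR (S i)); assert (hn : 1 <= n) by (apply (le_INR 1); lia).
  set (p := sqrt n); set (q := sqrt (n + 1)).
  assert (hp2 : p * p = n) by (apply sqrt_sqrt; lra).
  assert (hq2 : q * q = n + 1) by (apply sqrt_sqrt; lra).
  assert (hp : 1 <= p) by (unfold p; rewrite <- sqrt_1; apply sqrt_le_1_alt; lra).
  assert (hpq : p <= q) by (apply sqrt_le_1_alt; lra).
  assert (hq2p : q <= 2 * p) by nra.
  assert (hw : weight i = / p /\ weight (S i) = / q)
    by (unfold weight, q, n; rewrite (S_INR (S i)); split; reflexivity).
  unfold coef; rewrite (proj1 hw), (proj2 hw); fold n.
  replace ((/ p - / q) / n * n ^ 3) with (p * p * p * (q - p) / q) by (rewrite <- hp2; field; lra).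
  replace (q - p) with (/ (q + p)) by (field_simplify_eq; nra).
  apply Rle_trans with (p * p * p / (q * (q + p))); [| right; field; nra].
  unfold Rdiv; apply (Rmult_le_reg_r (6 * (q * (q + p)))); [nra |].
  replace (p * / 6 * (6 * (q * (q + p)))) with (p * (q * (q + p))) by field.
  replace (p * p * p * / (q * (q + p)) * (6 * (q * (q + p)))) with (6 * p * p * p) by (field; nra).
  nra.
Qed.

Lemma trunc_log_real_axis x a L : trunc_log a L (x, 0) = ln (Rmax (Rabs (x - a)) (exp L)).
Proof. unfold trunc_log; rewrite cdist_real_axis; reflexivity. Qed.

Lemma trunc_log_real_nonpos x a L : 0 < x < 1 -> 0 < a <= 1 -> L <= 0 -> trunc_log a L (x, 0) <= 0.
Proof.
  intros hx ha hL; rewrite trunc_log_real_axis, <- ln_1.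
  apply ln_le_ln; [eapply Rlt_le_trans; [apply (exp_pos L) | apply Rmax_r] |].
  apply Rmax_lub; [apply Rabs_le; lra |].
  rewrite <- exp_0; destruct hL as [hL | ->]; [left; apply exp_increasing |]; lra.
Qed.

Lemma fraction_in_unit j n : (j < n)%nat -> 0 < INR (S j) / INR n <= 1.
Proof.
  intros hj; assert (0 < INR n) by (apply lt_0_INR; lia).
  split; [apply Rdiv_lt_0_compat; [apply lt_0_INR |]; lia + lra |].
  apply (Rmult_le_reg_r (INR n)); [lra |].
  unfold Rdiv; rewrite Rmult_assoc, Rinv_l, Rmult_1_r, Rmult_1_l by lra; apply le_INR; lia.
Qed.

Lemma row_log_real_nonpos n L x : 0 < x < 1 -> L <= 0 -> row_log n L (x, 0) <= 0.
Proof.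
  intros hx hL; apply Rle_trans with (INR n * 0); [| lra].
  apply sum_below_le_const; intros j hj.
  apply trunc_log_real_nonpos; [exact hx | apply fraction_in_unit, hj | exact hL].
Qed.

Lemma row_log_near_fraction n m L x : 0 < x < 1 -> (1 <= m <= n)%nat ->
  Rabs (x - INR m / INR n) < rprime n -> L <= - INR n ^ 3 -> row_log n L (x, 0) <= - INR n ^ 3.
Proof.
  intros hx hm hxm hL.
  assert (hL0 : L <= 0) by (pose proof (pow_le (INR n) 3 (pos_INR n)); lra).
  eapply Rle_trans.
  - apply (sum_below_le_term _ n (pred m)); [| lia].
    intros j hj; apply trunc_log_real_nonpos; [exact hx | apply fraction_in_unit, hj | exact hL0].
  - replace (S (pred m)) with m by lia; rewrite trunc_log_real_axis, <- (ln_exp (- INR n ^ 3)).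
    apply ln_le_ln; [eapply Rlt_le_trans; [apply (exp_pos L) | apply Rmax_r] |].
    apply Rmax_lub; [unfold rprime in hxm; lra |].
    destruct hL as [hL | ->]; [left; apply exp_increasing, hL | lra].
Qed.

Lemma potential_near_fraction N n m x : 0 < x < 1 -> (1 <= m <= n)%nat -> (n <= N)%nat ->
  Rabs (x - INR m / INR n) < rprime n -> - INR N <= - INR n ^ 3 ->
  potential N (x, 0) <= - (coef (pred n) * INR n ^ 3) + 1.
Proof.
  intros hx hm hnN hxm hN.
  assert (hB : log_bound (x, 0) = 1).
  { unfold log_bound; rewrite trunc_log_real_axis, exp_0, Rmax_right, ln_1; [ring | apply Rabs_le; lra]. }
  unfold potential; rewrite hB, Rmult_1_r.
  apply Rplus_le_compat; [| apply weight_le_1].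
  eapply Rle_trans; [apply (sum_below_le_term _ N (pred n)); [| lia] |].
  - intros i _; pose proof (coef_nonneg i).
    pose proof (row_log_real_nonpos (S i) (- INR N) x hx ltac:(pose proof (pos_INR N); lra)); nra.
  - replace (S (pred n)) with n by lia; rewrite Ropp_mult_distr_r.
    apply Rmult_le_compat_l; [apply coef_nonneg | apply row_log_near_fraction with m; auto].
Qed.

Lemma potential_unbounded_on_Gset x : Gset x -> forall K, exists N, potential N (x, 0) < K.
Proof.
  intros hG K; pose proof (Gset_unit_interval x hG) as hx.
  destruct (INR_unbounded ((6 * (Rabs K + 2)) * (6 * (Rabs K + 2)))) as [k0 hk0].
  destruct (hG (S k0) ltac:(lia)) as [n [hn [m [hm [_ hxm]]]]].
  exists (n ^ 3)%nat.
  assert (hN : INR (n ^ 3) = INR n ^ 3) by apply pow_INR.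
  pose proof (potential_near_fraction (n ^ 3) n m x hx hm ltac:(simpl; nia) hxm ltac:(lra)).
  pose proof (coef_cube_ge (pred n)) as hc; replace (S (pred n)) with n in hc by lia.
  assert (6 * (Rabs K + 2) <= sqrt (INR n)).
  { pose proof (Rabs_pos K); rewrite <- (sqrt_square (6 * (Rabs K + 2))) by lra.
    apply sqrt_le_1_alt; apply Rlt_le, (Rlt_le_trans _ _ _ hk0), le_INR; lia. }
  pose proof (Rle_abs (- K)) as hK; rewrite Rabs_Ropp in hK; lra.
Qed.

Lemma Gset_polar : polar Gset.
Proof.
  exists inf_potential; split; [split; [apply inf_potential_usc | apply inf_potential_submean] |].
  split; [apply inf_potential_not_minus_infinity |]; intros x hG.
  destruct (inf_potential_cases (x, 0)) as [[v [_ [hlb _]]] | [-> _]]; [exfalso | reflexivity].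
  destruct (potential_unbounded_on_Gset x hG v) as [N hN]; specialize (hlb N); lra.
Qed.

Theorem mainTheorem9 :
  dense_in_unit Gset /\ G_delta Gset /\ (forall x, Gset x -> Sset x) /\
  log_measure_zero Gset /\ polar Gset.
Proof.
  exact (conj Gset_dense (conj Gset_G_delta (conj Gset_in_S (conj Gset_log_measure_zero Gset_polar)))).
Qed.
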